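(* Given $x \in \mathbb{T}^2$ and $i \in \{1,\dots,M\}$ such that $\mu(\Phi^{\overline{U}}(x,0,t^i_a+s)) \neq 0$ or $\mu(\Phi^{\overline{u}^{\star}(\cdot-S_i, \cdot)}(x+S_i,0,s)) \neq 0$ holds for at least one $s \in [0,T^{\star}]$, it holds \[ \Phi^{\overline{U}}(x,0,t^i_a+t) = \Phi^{\overline{u}^{\star}(\cdot-S_i, \cdot)}(x+S_i,0,t) \] for all $t \in [0, T^{\star}]$.
   Context: $\mathbb{T}^2=\mathbb{R}^2/2\pi\mathbb{Z}^2$, $\omega\subset\mathbb{T}^2$ nonempty open. $\Phi^v(x,s,t)$ denotes the flow of a vector field $v$: $\frac{d}{dt}\Phi^v(x,s,t)=v(\Phi^v(x,s,t),t)$, $\Phi^v(x,s,s)=x$. A length $L>0$ (depending on $\omega$) is fixed with: an open covering of $\mathbb{T}^2$ by squares $\mathcal{O}_1,\dots,\mathcal{O}_M$ of side $L$; an open square $\mathcal{O}$ with $\overline{\mathcal{O}}\subset\omega$ and shifts $S_i\in\mathbb{R}^2$ with $\mathcal{O}=\mathcal{O}_i+S_i$; a cutoff $\mu\in C^\infty(\mathbb{T}^2;[0,1])$ with $\operatorname{supp}\mu\subset\mathcal{O}$ and $\sum_i\mu(\cdot+S_i)=1$; a cutoff $\chi\in C^\infty(\mathbb{T}^2)$ with $\operatorname{supp}\chi\subset\omega$, $\chi=1$ near $\overline{\mathcal{O}}$; and times $T^\star=1/(3M+2)$ and $0<t^0_c<t^1_a<t^1_b<t^1_c<\dots<t^M_c<1$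 equidistant with spacing $T^\star$. $\overline{y}\in C_0^\infty((0,1);C^\infty(\mathbb{T}^2;\mathbb{R}^2))$ is a divergence-free field vanishing on $[t^i_a,t^i_b]$ for all $i$, whose flow satisfies $\Phi^{\overline{y}}(x,0,[t^i_a,t^i_b])=\{x+S_i\}$ whenever $\operatorname{dist}(x,\mathcal{O}_i)<L$, and which is odd-in-time about the midpoints of $[t^{i-1}_c,t^i_c]$. $\overline{u}^\star=\nabla^\perp\overline{\phi}^\star$ on $[0,T^\star]$ is a divergence-free field with stream function $\overline{\phi}^\star$ in $\operatorname{span}\{\sin x_1,\sin x_2,\cos x_1,\cos x_2\}$ at each time, time-reversal symmetric about $T^\star/2$, and so small (via a parameter $\kappa$) that there is $r\in(0,L)$ with $\chi=1$ on the $r$-neighborhood $\mathcal{N}_r$ of $\mathcal{O}$, $\mathcal{N}_r$ containing all flow images $\Phi^{\nabla^\perp[\chi\overline{\phi}^\star(\cdot-S,\cdot)]}(\operatorname{supp}\mu,s,t)$ and $\Phi^{\overline{u}^\star(\cdot-S,\cdot)}(\operatorname{supp}\mu,s,t)$ ($s,t\in[0,T^\star]$, $S\in\mathbb{R}^2$). Finally $\overline{U}(x,t)=\overline{y}(x,t)+\sum_{i=1}^M\mathbb{I}_{[t^i_a,t^i_b]}(t)\nabla^\perp[\chi(x)\overline{\phi}^\star(x-S_i,t-t^i_a)]$. *)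

(* The torus T^2 = R^2 / 2piZ^2 is modelled by its universal cover R*R:
   functions on T^2 are 2pi-periodic functions on R*R, subsets of T^2 are
   2pi-periodic predicates on R*R, flows are the lifted flows on R^2, and
   equality of points of T^2 is congruence modulo 2piZ^2 ([teq]). *)
From Stdlib Require Import Reals Lra.
From Coquelicot Require Import Coquelicot.
Open Scope R_scope.

Definition pt := (R * R)%type.
Definition padd (p q : pt) : pt := (fst p + fst q, snd p + snd q).
Definition psub (p q : pt) : pt := (fst p - fst q, snd p - snd q).
Definition pneg (p : pt) : pt := (- fst p, - snd p).
Definition pzero : pt := (0, 0).
Definition eucl (p : pt) : R := sqrt (fst p ^ 2 + snd p ^ 2).

Definition teq (p q : pt) : Prop :=
  exists k1 k2 : Z, fst p = fst q + 2 * PI * IZR k1 /\ snd p = snd q + 2 * PI * IZR k2.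

Definition periodic {A : Type} (f : pt -> A) : Prop :=
  forall x : pt, f (fst x + 2 * PI, snd x) = f x /\ f (fst x, snd x + 2 * PI) = f x.

Definition is_open (A : pt -> Prop) : Prop :=
  forall x, A x -> exists e, 0 < e /\ forall y, eucl (psub y x) < e -> A y.

Definition tsq (c : pt) (L : R) (x : pt) : Prop :=
  exists k1 k2 : Z,
    fst c < fst x + 2 * PI * IZR k1 < fst c + L /\
    snd c < snd x + 2 * PI * IZR k2 < snd c + L.
Definition tsq_cl (c : pt) (L : R) (x : pt) : Prop :=
  exists k1 k2 : Z,
    fst c <= fst x + 2 * PI * IZR k1 <= fst c + L /\
    snd c <= snd x + 2 * PI * IZR k2 <= snd c + L.

Definition nbhd (A : pt -> Prop) (r : R) (x : pt) : Prop :=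
  exists y, A y /\ eucl (psub x y) < r.

Definition supp (f : pt -> R) (x : pt) : Prop :=
  forall e, 0 < e -> exists y, eucl (psub y x) < e /\ f y <> 0.

Definition d1 (f : R -> R -> R -> R) : R -> R -> R -> R :=
  fun a b c => Derive (fun y => f y b c) a.
Definition d2 (f : R -> R -> R -> R) : R -> R -> R -> R :=
  fun a b c => Derive (fun y => f a y c) b.
Definition d3 (f : R -> R -> R -> R) : R -> R -> R -> R :=
  fun a b c => Derive (fun y => f a b y) c.

Definition cont3 (f : R -> R -> R -> R) : Prop :=
  forall a b c e, 0 < e -> exists d, 0 < d /\
    forall a' b' c', Rabs (a' - a) < d -> Rabs (b' - b) < d -> Rabs (c' - c) < d ->
      Rabs (f a' b' c' - f a b c) < e.

Fixpoint Ck (n : nat) (f : R -> R -> R -> R) : Prop :=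
  match n with
  | O => cont3 f
  | S n =>
      (forall a b c, ex_derive (fun y => f y b c) a /\ ex_derive (fun y => f a y c) b
                     /\ ex_derive (fun y => f a b y) c)
      /\ Ck n f /\ Ck n (d1 f) /\ Ck n (d2 f) /\ Ck n (d3 f)
  end.
Definition smooth3 (f : R -> R -> R -> R) : Prop := forall n, Ck n f.

Definition smooth_sp (f : pt -> R) : Prop := smooth3 (fun a b _ => f (a, b)).
Definition smooth_vf (v : pt -> R -> pt) : Prop :=
  smooth3 (fun a b t => fst (v (a, b) t)) /\ smooth3 (fun a b t => snd (v (a, b) t)).

Definition pd1 (f : pt -> R) (x : pt) : R := Derive (fun y => f (y, snd x)) (fst x).
Definition pd2 (f : pt -> R) (x : pt) : R := Derive (fun y => f (fst x, y)) (snd x).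
Definition perp_grad (f : pt -> R) (x : pt) : pt := (- pd2 f x, pd1 f x).

Definition div_free (v : pt -> R -> pt) : Prop :=
  forall x t, pd1 (fun y => fst (v y t)) x + pd2 (fun y => snd (v y t)) x = 0.

(* Phi is the flow of v on the time set I (Caratheodory / integral form):
   Phi x s t = x + int_s^t v (Phi x s tau) tau dtau, for s, t in I. *)
Definition IsFlowOn (I : R -> Prop) (v : pt -> R -> pt) (Phi : pt -> R -> R -> pt) : Prop :=
  forall x s t, I s -> I t ->
    is_RInt (fun tau => fst (v (Phi x s tau) tau)) s t (fst (Phi x s t) - fst x) /\
    is_RInt (fun tau => snd (v (Phi x s tau) tau)) s t (snd (Phi x s t) - snd x).

(* finite sums over i = 1..n *)
Fixpoint rsum (f : nat -> R) (n : nat) : R :=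
  match n with O => 0 | S m => rsum f m + f (S m) end.
Fixpoint vsum (f : nat -> pt) (n : nat) : pt :=
  match n with O => pzero | S m => padd (vsum f m) (f (S m)) end.

Definition Tstar (M : nat) : R := 1 / (3 * INR M + 2).
Definition t_a (M : nat) (t0 : R) (i : nat) : R := t0 + (3 * INR i - 2) * Tstar M.
Definition t_b (M : nat) (t0 : R) (i : nat) : R := t0 + (3 * INR i - 1) * Tstar M.
Definition t_c (M : nat) (t0 : R) (i : nat) : R := t0 + 3 * INR i * Tstar M.

Definition phistar (a1 a2 a3 a4 : R -> R) (x : pt) (t : R) : R :=
  a1 t * sin (fst x) + a2 t * sin (snd x) + a3 t * cos (fst x) + a4 t * cos (snd x).

Definition ustar_sh (a1 a2 a3 a4 : R -> R) (S : pt) (x : pt) (t : R) : pt :=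
  perp_grad (fun y => phistar a1 a2 a3 a4 (psub y S) t) x.
Definition chiu_sh (chi : pt -> R) (a1 a2 a3 a4 : R -> R) (S : pt) (x : pt) (t : R) : pt :=
  perp_grad (fun y => chi y * phistar a1 a2 a3 a4 (psub y S) t) x.

Definition indic (lo hi t : R) : R :=
  if Rle_dec lo t then (if Rle_dec t hi then 1 else 0) else 0.
Definition pscale (k : R) (p : pt) : pt := (k * fst p, k * snd p).

Definition Ubar (M : nat) (t0 : R) (ybar : pt -> R -> pt) (chi : pt -> R)
  (a1 a2 a3 a4 : R -> R) (Sh : nat -> pt) (x : pt) (t : R) : pt :=
  padd (ybar x t)
    (vsum (fun i => pscale (indic (t_a M t0 i) (t_b M t0 i) t)
                      (chiu_sh chi a1 a2 a3 a4 (Sh i) x (t - t_a M t0 i))) M).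

(* All fields involved are Lipschitz in space (uniformly on compact time intervals), so
   solutions of the integral equation are unique; every identity between trajectories below
   is an instance of this uniqueness.

   Off the bumps [t^j_a, t^j_b], Ubar coincides with ybar, and on each cell
   [t^(j-1)_c, t^j_c] both fields are odd in time about its midpoint, so both flows return
   at t^j_c to their position at t^(j-1)_c.  By induction over the cells the flows of Ubar
   and ybar therefore agree at t^i_a, and on [t^i_a, t^i_b] Ubar is the cut-off field
   nabla^perp [chi phi^star(. - S_i)].  If either trajectory meets supp mu, it stays in the
   r-neighbourhood of O, where chi = 1 and the cut-off field equals ubar^star(. - S_i).  Its
   starting point is x + S_i modulo 2 pi Z^2: this is the shifting property of ybar, together
   with injectivity and 2 pi Z^2-equivariance of the flow of ybar.  Uniqueness then
   identifies the two trajectories modulo 2 pi Z^2. *)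

From Pilot Require Import Defs.
From Stdlib Require Import Reals.
From Coquelicot Require Import Coquelicot.
From Stdlib Require Import Lra ZArith Lia Classical.
Open Scope R_scope.

(** * Solutions of the integral equation *)

Definition norm1 (p : pt) : R := Rabs (fst p) + Rabs (snd p).

Lemma norm1_ge0 p : 0 <= norm1 p.
Proof. unfold norm1. pose proof (Rabs_pos (fst p)); pose proof (Rabs_pos (snd p)); lra. Qed.

Lemma norm1_pzero : norm1 pzero = 0.
Proof. unfold norm1, pzero; simpl. rewrite Rabs_R0. ring. Qed.

Lemma norm1_psub_diag p : norm1 (psub p p) = 0.
Proof. unfold norm1, psub; simpl. rewrite !Rminus_diag, Rabs_R0. ring. Qed.

Lemma norm1_psub_le0 p q : norm1 (psub p q) <= 0 -> p = q.
Proof.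
  destruct p as [p1 p2], q as [q1 q2]; unfold norm1, psub; simpl; intros H.
  pose proof (Rabs_pos (p1 - q1)); pose proof (Rabs_pos (p2 - q2)).
  assert (E1 : Rabs (p1 - q1) = 0) by lra. assert (E2 : Rabs (p2 - q2) = 0) by lra.
  apply Rabs_eq_0 in E1. apply Rabs_eq_0 in E2. f_equal; lra.
Qed.

Lemma norm1_padd_le p q : norm1 (padd p q) <= norm1 p + norm1 q.
Proof.
  unfold norm1, padd; simpl.
  pose proof (Rabs_triang (fst p) (fst q)); pose proof (Rabs_triang (snd p) (snd q)); lra.
Qed.

Lemma norm1_psub_padd_le p q p' q' :
  norm1 (psub (padd p q) (padd p' q')) <= norm1 (psub p p') + norm1 (psub q q').
Proof.
  replace (psub (padd p q) (padd p' q')) with (padd (psub p p') (psub q q'))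
    by (unfold padd, psub; simpl; f_equal; ring).
  apply norm1_padd_le.
Qed.

Lemma norm1_psub_triang p q w : norm1 (psub p q) <= norm1 (psub p w) + norm1 (psub w q).
Proof.
  replace (psub p q) with (padd (psub p w) (psub w q)) by (unfold padd, psub; simpl; f_equal; ring).
  apply norm1_padd_le.
Qed.

Lemma norm1_psub_comm p q : norm1 (psub p q) = norm1 (psub q p).
Proof. unfold norm1, psub; simpl. rewrite (Rabs_minus_sym (fst p)), (Rabs_minus_sym (snd p)). reflexivity. Qed.

Lemma Rabs_fst_le_norm1 p : Rabs (fst p) <= norm1 p.
Proof. unfold norm1. pose proof (Rabs_pos (snd p)). lra. Qed.

Lemma Rabs_snd_le_norm1 p : Rabs (snd p) <= norm1 p.
Proof. unfold norm1. pose proof (Rabs_pos (fst p)). lra. Qed.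

Lemma Rabs_fst_sub_le_norm1 p q : Rabs (fst p - fst q) <= norm1 (psub p q).
Proof. exact (Rabs_fst_le_norm1 (psub p q)). Qed.

Lemma Rabs_snd_sub_le_norm1 p q : Rabs (snd p - snd q) <= norm1 (psub p q).
Proof. exact (Rabs_snd_le_norm1 (psub p q)). Qed.

Lemma between_in_interval a b s u w :
  a <= s <= b -> a <= u <= b -> Rmin s u <= w <= Rmax s u ->
  a <= w <= b /\ Rabs (w - s) <= Rabs (u - s).
Proof.
  unfold Rmin, Rmax; destruct (Rle_dec s u); intros; split; try lra; split_Rabs; lra.
Qed.

Definition IsSolOn (v : pt -> R -> pt) (X : R -> pt) (a b : R) : Prop :=
  forall s t, a <= s <= b -> a <= t <= b ->
    is_RInt (fun u => fst (v (X u) u)) s t (fst (X t) - fst (X s)) /\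
    is_RInt (fun u => snd (v (X u) u)) s t (snd (X t) - snd (X s)).

Lemma flow_start I v Phi x s : IsFlowOn I v Phi -> I s -> Phi x s s = x.
Proof.
  intros HF Hs. destruct (HF x s s Hs Hs) as [A1 A2].
  apply (@is_RInt_unique R_CompleteNormedModule) in A1.
  apply (@is_RInt_unique R_CompleteNormedModule) in A2.
  rewrite RInt_point in A1, A2. unfold zero in A1, A2; simpl in A1, A2.
  destruct (Phi x s s), x; simpl in *. f_equal; lra.
Qed.

Lemma flow_IsSolOn I v Phi x s a b :
  IsFlowOn I v Phi -> I s -> (forall t, a <= t <= b -> I t) -> IsSolOn v (Phi x s) a b.
Proof.
  intros HF Hs Hab s1 t1 H1 H2.
  destruct (HF x s s1 Hs (Hab _ H1)) as [A1 A2].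
  destruct (HF x s t1 Hs (Hab _ H2)) as [B1 B2].
  split.
  - replace (fst (Phi x s t1) - fst (Phi x s s1))
      with (plus (opp (fst (Phi x s s1) - fst x)) (fst (Phi x s t1) - fst x))
      by (unfold plus, opp; simpl; ring).
    apply (@is_RInt_Chasles R_NormedModule _ s1 s t1); [apply (@is_RInt_swap R_NormedModule)|];
      assumption.
  - replace (snd (Phi x s t1) - snd (Phi x s s1))
      with (plus (opp (snd (Phi x s s1) - snd x)) (snd (Phi x s t1) - snd x))
      by (unfold plus, opp; simpl; ring).
    apply (@is_RInt_Chasles R_NormedModule _ s1 s t1); [apply (@is_RInt_swap R_NormedModule)|];
      assumption.
Qed.

Definition LipBoundedOn (v : pt -> R -> pt) (a b : R) : Prop :=
  exists K B, 0 <= K /\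
    (forall p q u, a <= u <= b -> norm1 (psub (v p u) (v q u)) <= K * norm1 (psub p q)) /\
    (forall p u, a <= u <= b -> norm1 (v p u) <= B).

Lemma LipBoundedOn_sub v a b a' b' : LipBoundedOn v a b -> a <= a' -> b' <= b -> LipBoundedOn v a' b'.
Proof.
  intros [K [B [HK [HL HB]]]] H1 H2. exists K, B.
  split; [exact HK | split; intros; [apply HL | apply HB]; lra].
Qed.

Lemma div_pow2_eventually_lt C e : 0 < e -> exists n : nat, C / 2 ^ n < e.
Proof.
  intros He. destruct (INR_unbounded (C / e)) as [n Hn]. exists n.
  assert (Hp : INR n + 1 <= 2 ^ n).
  { clear Hn. induction n; [simpl; lra|]. rewrite S_INR. simpl. pose proof (pos_INR n). lra. }
  assert (H2 : 0 < 2 ^ n) by (apply pow_lt; lra).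
  apply Rmult_lt_reg_r with (2 ^ n); [lra|].
  replace (C / 2 ^ n * 2 ^ n) with (C / e * e) by (field; lra).
  apply Rlt_le_trans with (INR n * e); [apply Rmult_lt_compat_r; lra|].
  rewrite Rmult_comm. apply Rmult_le_compat_l; lra.
Qed.

Section Uniqueness.
Variables (v : pt -> R -> pt) (a b K B : R).
Hypothesis HK : 0 <= K.
Hypothesis Hlip : forall p q u, a <= u <= b -> norm1 (psub (v p u) (v q u)) <= K * norm1 (psub p q).
Hypothesis Hbd : forall p u, a <= u <= b -> norm1 (v p u) <= B.

Lemma sol_increment_le X s u : IsSolOn v X a b -> a <= s <= b -> a <= u <= b ->
  norm1 (psub (X u) (X s)) <= 2 * B * Rabs (u - s).
Proof.
  intros HX Hs Hu. destruct (HX s u Hs Hu) as [I1 I2].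
  assert (Hw : forall w, Rmin s u <= w <= Rmax s u -> norm1 (v (X w) w) <= B).
  { intros w Hw. apply Hbd, (between_in_interval a b s u w Hs Hu Hw). }
  apply norm_RInt_le_const_abs with (M := B) in I1;
    [|intros w Hw'; eapply Rle_trans; [apply Rabs_fst_le_norm1 | apply Hw, Hw']].
  apply norm_RInt_le_const_abs with (M := B) in I2;
    [|intros w Hw'; eapply Rle_trans; [apply Rabs_snd_le_norm1 | apply Hw, Hw']].
  change norm with Rabs in I1, I2. unfold norm1, psub; simpl. lra.
Qed.

Lemma sol_gap_le X Y s u C : IsSolOn v X a b -> IsSolOn v Y a b ->
  a <= s <= b -> a <= u <= b -> X s = Y s ->
  (forall w, Rmin s u <= w <= Rmax s u -> norm1 (psub (X w) (Y w)) <= C) ->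
  norm1 (psub (X u) (Y u)) <= 2 * (K * C) * Rabs (u - s).
Proof.
  intros HX HY Hs Hu Heq HC.
  destruct (HX s u Hs Hu) as [A1 A2]. destruct (HY s u Hs Hu) as [B1 B2].
  assert (Hv : forall w, Rmin s u <= w <= Rmax s u ->
            norm1 (psub (v (X w) w) (v (Y w) w)) <= K * C).
  { intros w Hw. eapply Rle_trans; [apply Hlip, (between_in_interval a b s u w Hs Hu Hw)|].
    apply Rmult_le_compat_l; [exact HK | apply HC, Hw]. }
  pose proof (is_RInt_minus _ _ _ _ _ _ A1 B1) as D1.
  pose proof (is_RInt_minus _ _ _ _ _ _ A2 B2) as D2.
  apply norm_RInt_le_const_abs with (M := K * C) in D1;
    [|intros w Hw; eapply Rle_trans; [|apply Hv, Hw]; apply (Rabs_fst_le_norm1 (psub _ _))].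
  apply norm_RInt_le_const_abs with (M := K * C) in D2;
    [|intros w Hw; eapply Rle_trans; [|apply Hv, Hw]; apply (Rabs_snd_le_norm1 (psub _ _))].
  change norm with Rabs in D1, D2. unfold minus, plus, opp in D1, D2; simpl in D1, D2.
  rewrite Heq in D1, D2. unfold norm1, psub; simpl.
  replace (fst (X u) - fst (Y s) + - (fst (Y u) - fst (Y s))) with (fst (X u) - fst (Y u)) in D1 by ring.
  replace (snd (X u) - snd (Y s) + - (snd (Y u) - snd (Y s))) with (snd (X u) - snd (Y u)) in D2 by ring.
  lra.
Qed.

(* The window length [h] makes one step of the integral equation a contraction by [1/2]. *)
Let h := / (4 * K + 4).

Lemma window_pos : 0 < h.
Proof. unfold h. apply Rinv_0_lt_compat. lra. Qed.

Lemma window_contraction : 2 * K * h <= / 2.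
Proof.
  unfold h. apply Rmult_le_reg_r with (4 * K + 4); [lra|].
  rewrite Rmult_assoc, Rinv_l by lra. lra.
Qed.

Lemma sol_unique_near X Y s : IsSolOn v X a b -> IsSolOn v Y a b ->
  a <= s <= b -> X s = Y s -> forall u, a <= u <= b -> Rabs (u - s) <= h -> X u = Y u.
Proof.
  intros HX HY Hs Heq.
  pose proof window_pos as Hh.
  assert (HB : 0 <= B) by (eapply Rle_trans; [apply norm1_ge0 | apply (Hbd pzero s Hs)]).
  assert (Hn : forall n : nat, forall u, a <= u <= b -> Rabs (u - s) <= h ->
             norm1 (psub (X u) (Y u)) <= 4 * B * h / 2 ^ n).
  { induction n as [|n IHn]; intros u Hu Hus.
    - simpl. unfold Rdiv. rewrite Rinv_1, Rmult_1_r.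
      pose proof (sol_increment_le X s u HX Hs Hu).
      pose proof (sol_increment_le Y s u HY Hs Hu) as HYu. rewrite <- Heq in HYu.
      pose proof (norm1_psub_triang (X u) (Y u) (X s)) as Htri.
      rewrite (norm1_psub_comm (X s)) in Htri.
      assert (B * Rabs (u - s) <= B * h) by (apply Rmult_le_compat_l; lra). lra.
    - set (C := 4 * B * h / 2 ^ n).
      assert (HC : 0 <= C) by (unfold C, Rdiv; apply Rmult_le_pos;
        [apply Rmult_le_pos; lra | left; apply Rinv_0_lt_compat, pow_lt; lra]).
      eapply Rle_trans.
      { apply (sol_gap_le X Y s u C HX HY Hs Hu Heq). intros w Hw.
        destruct (between_in_interval a b s u w Hs Hu Hw). apply IHn; lra. }
      replace (4 * B * h / 2 ^ S n) with (C / 2) by (unfold C; simpl; field; apply pow_nonzero; lra).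
      pose proof window_contraction.
      assert (K * C * Rabs (u - s) <= K * C * h)
        by (apply Rmult_le_compat_l; [apply Rmult_le_pos|]; lra).
      assert (C * (2 * K * h) <= C * / 2) by (apply Rmult_le_compat_l; lra).
      lra. }
  intros u Hu Hus. apply norm1_psub_le0.
  destruct (Rle_dec (norm1 (psub (X u) (Y u))) 0) as [H|H]; [exact H|].
  destruct (div_pow2_eventually_lt (4 * B * h) (norm1 (psub (X u) (Y u)))) as [n Hn']; [lra|].
  specialize (Hn n u Hu Hus). lra.
Qed.

Lemma sol_unique_of_lipschitz X Y s0 : IsSolOn v X a b -> IsSolOn v Y a b ->
  a <= s0 <= b -> X s0 = Y s0 -> forall t, a <= t <= b -> X t = Y t.
Proof.
  intros HX HY Hs0 Heq. pose proof window_pos as Hh.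
  assert (Hn : forall n : nat, forall t, a <= t <= b -> Rabs (t - s0) <= INR n * h -> X t = Y t).
  { induction n as [|n IHn]; intros t Ht Hts.
    - simpl in Hts. replace t with s0; [exact Heq|].
      assert (E : Rabs (t - s0) = 0) by (pose proof (Rabs_pos (t - s0)); lra).
      apply Rabs_eq_0 in E. lra.
    - (* step through the point [s] dividing [s0, t] in the ratio [n : 1] *)
      rewrite S_INR in Hts. pose proof (pos_INR n) as Hn0.
      set (s := s0 + (t - s0) * (INR n / (INR n + 1))).
      assert (Hq : 0 <= INR n / (INR n + 1) <= 1).
      { assert (E : INR n / (INR n + 1) * (INR n + 1) = INR n) by (field; lra).
        split; [apply Rdiv_le_0_compat|]; nra. }
      assert (Es : s - s0 = (t - s0) * (INR n / (INR n + 1))) by (unfold s; ring).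
      assert (Et : t - s = (t - s0) / (INR n + 1)) by (unfold s; field; lra).
      assert (Hs : a <= s <= b)
        by (unfold s; destruct (Rle_dec s0 t); split; nra).
      apply (sol_unique_near X Y s HX HY Hs); [apply IHn; [exact Hs|] | exact Ht |].
      + rewrite Es, Rabs_mult, (Rabs_right (INR n / (INR n + 1))) by lra.
        apply Rle_trans with ((INR n + 1) * h * (INR n / (INR n + 1)));
          [apply Rmult_le_compat_r; lra | right; field; lra].
      + rewrite Et. unfold Rdiv.
        rewrite Rabs_mult, (Rabs_right (/ (INR n + 1))) by (left; apply Rinv_0_lt_compat; lra).
        apply Rmult_le_reg_r with (INR n + 1); [lra|].
        rewrite Rmult_assoc, Rinv_l by lra. nra. }
  intros t Ht. destruct (INR_unbounded ((b - a) / h)) as [n Hn3].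
  apply (Hn n t Ht).
  assert ((b - a) / h * h <= INR n * h) by (apply Rmult_le_compat_r; lra).
  replace ((b - a) / h * h) with (b - a) in H by (field; lra).
  split_Rabs; lra.
Qed.

End Uniqueness.

Lemma sol_unique v X Y a b s0 t : LipBoundedOn v a b -> IsSolOn v X a b -> IsSolOn v Y a b ->
  a <= s0 <= b -> a <= t <= b -> X s0 = Y s0 -> X t = Y t.
Proof.
  intros [K [B [HK [HL HB]]]] HX HY Hs0 Ht E.
  exact (sol_unique_of_lipschitz v a b K B HK HL HB X Y s0 HX HY Hs0 E t Ht).
Qed.

Lemma IsSolOn_ext v w X a b : IsSolOn v X a b ->
  (forall u, a < u < b -> v (X u) u = w (X u) u) -> IsSolOn w X a b.
Proof.
  intros H E s t Hs Ht. destruct (H s t Hs Ht) as [A1 A2].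
  assert (E' : forall u, Rmin s t < u < Rmax s t -> v (X u) u = w (X u) u)
    by (intros u Hu; apply E; unfold Rmin, Rmax in Hu; destruct (Rle_dec s t); lra).
  split; (eapply is_RInt_ext; [|eassumption]); intros u Hu; cbv beta; rewrite E'; auto.
Qed.

Lemma IsSolOn_sub v X a b a' b' : IsSolOn v X a b -> a <= a' -> b' <= b -> IsSolOn v X a' b'.
Proof. intros H H1 H2 s t Hs Ht. apply H; lra. Qed.

Lemma IsSolOn_time_shift v X a b c : IsSolOn v X a b ->
  IsSolOn (fun p u => v p (c + u)) (fun u => X (c + u)) (a - c) (b - c).
Proof.
  intros H s t Hs Ht. destruct (H (c + s) (c + t)) as [A1 A2]; try lra.
  set (l1 := fst (X (c + t)) - fst (X (c + s))) in A1.
  set (l2 := snd (X (c + t)) - snd (X (c + s))) in A2.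
  replace (c + s) with (1 * s + c) in A1, A2 by ring.
  replace (c + t) with (1 * t + c) in A1, A2 by ring.
  apply (is_RInt_comp_lin _ 1 c) in A1. apply (is_RInt_comp_lin _ 1 c) in A2.
  split; (eapply is_RInt_ext; [|eassumption]); intros y _;
    cbv beta; replace (1 * y + c) with (c + y) by ring; apply Rmult_1_l.
Qed.

Lemma IsSolOn_time_reflect v X a b m : IsSolOn v X a b ->
  IsSolOn (fun p u => pneg (v p (2 * m - u))) (fun u => X (2 * m - u)) (2 * m - b) (2 * m - a).
Proof.
  intros H s t Hs Ht. destruct (H (2 * m - s) (2 * m - t)) as [A1 A2]; try lra.
  set (l1 := fst (X (2 * m - t)) - fst (X (2 * m - s))) in A1.
  set (l2 := snd (X (2 * m - t)) - snd (X (2 * m - s))) in A2.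
  replace (2 * m - s) with (-1 * s + 2 * m) in A1, A2 by ring.
  replace (2 * m - t) with (-1 * t + 2 * m) in A1, A2 by ring.
  apply (is_RInt_comp_lin _ (-1) (2 * m)) in A1. apply (is_RInt_comp_lin _ (-1) (2 * m)) in A2.
  split; (eapply is_RInt_ext; [|eassumption]); intros y _;
    unfold scal, pneg; simpl; unfold mult; simpl;
    replace (-1 * y + 2 * m) with (2 * m - y) by ring; ring.
Qed.

Lemma IsSolOn_translate v X a b w : IsSolOn v X a b ->
  (forall u, a <= u <= b -> v (padd (X u) w) u = v (X u) u) ->
  IsSolOn v (fun u => padd (X u) w) a b.
Proof.
  intros H E s t Hs Ht. destruct (H s t Hs Ht) as [A1 A2].
  assert (E' : forall u, Rmin s t < u < Rmax s t -> v (padd (X u) w) u = v (X u) u)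
    by (intros u Hu; apply E; unfold Rmin, Rmax in Hu; destruct (Rle_dec s t); lra).
  unfold padd at 2 3; simpl.
  replace (fst (X t) + fst w - (fst (X s) + fst w)) with (fst (X t) - fst (X s)) by ring.
  replace (snd (X t) + snd w - (snd (X s) + snd w)) with (snd (X t) - snd (X s)) by ring.
  split; (eapply is_RInt_ext; [|eassumption]); intros u Hu; cbv beta; rewrite E'; auto.
Qed.

(* The reflected curve [u |-> X (2m - u)] solves the same equation on [m, m + h],
   and both curves pass through [X m]. *)
Lemma sol_returns_of_time_odd v X m h : 0 <= h ->
  LipBoundedOn v (m - h) (m + h) -> IsSolOn v X (m - h) (m + h) ->
  (forall p th, 0 < th < h -> v p (m + th) = pneg (v p (m - th))) ->
  X (m + h) = X (m - h).
Proof.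
  intros Hh HL HX Hodd.
  pose proof (IsSolOn_time_reflect v X (m - h) (m + h) m HX) as HZ.
  replace (2 * m - (m + h)) with (m - h) in HZ by ring.
  replace (2 * m - (m - h)) with (m + h) in HZ by ring.
  assert (HZ' : IsSolOn v (fun u => X (2 * m - u)) m (m + h)).
  { apply (IsSolOn_ext (fun p u => pneg (v p (2 * m - u)))).
    - apply (IsSolOn_sub _ _ (m - h) (m + h)); auto; lra.
    - intros u Hu. set (th := u - m).
      replace u with (m + th) by (unfold th; ring).
      replace (2 * m - (m + th)) with (m - th) by ring.
      rewrite (Hodd _ th) by (unfold th; lra).
      unfold pneg; simpl. destruct (v _ _); simpl. f_equal; ring. }
  replace (m - h) with (2 * m - (m + h)) by ring.
  apply (sol_unique v X (fun u => X (2 * m - u)) m (m + h) m).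
  - apply (LipBoundedOn_sub _ (m - h) (m + h)); auto; lra.
  - apply (IsSolOn_sub _ _ (m - h) (m + h)); auto; lra.
  - exact HZ'.
  - lra.
  - lra.
  - f_equal; ring.
Qed.

Lemma sol_eq_flow I v Phi Y a b s u : LipBoundedOn v a b -> IsFlowOn I v Phi ->
  (forall t, a <= t <= b -> I t) -> IsSolOn v Y a b -> a <= s <= b -> a <= u <= b ->
  Y u = Phi (Y s) s u.
Proof.
  intros HL HF HI HY Hs Hu.
  apply (sol_unique v Y (Phi (Y s) s) a b s u HL HY); auto.
  - apply (flow_IsSolOn I); auto.
  - symmetry. apply (flow_start I v); auto.
Qed.

(** * Bounds for periodic C^1 functions *)

(* Compactness of [lo, hi] by a supremum argument: a property holding uniformly near
   each point, and stable under shrinking [d] and enlarging [M], holds uniformly. *)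
Lemma interval_uniformize (lo hi : R) (H : R -> R -> R -> Prop) : lo <= hi ->
  (forall c d M d' M', H c d M -> 0 < d' <= d -> M <= M' -> H c d' M') ->
  (forall c, lo <= c <= hi -> exists d e M, 0 < d /\ 0 < e /\
      forall c', lo <= c' <= hi -> Rabs (c' - c) < e -> H c' d M) ->
  exists d M, 0 < d /\ forall c, lo <= c <= hi -> H c d M.
Proof.
  intros Hlh Hmon Hloc.
  set (Good := fun u => lo <= u <= hi /\ exists d M, 0 < d /\ forall c, lo <= c <= u -> H c d M).
  assert (Good_lo : Good lo).
  { destruct (Hloc lo) as [d [e [M [Hd [He HH]]]]]; [lra|].
    split; [lra|]. exists d, M; split; auto. intros c Hc. apply HH; [lra|].
    replace (c - lo) with 0 by lra. rewrite Rabs_R0; lra. }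
  destruct (completeness Good) as [s [Hub Hlub]];
    [exists hi; intros u [Hu _]; lra | exists lo; exact Good_lo|].
  assert (Hs1 : lo <= s) by (apply Hub; exact Good_lo).
  assert (Hs2 : s <= hi) by (apply Hlub; intros u [Hu _]; lra).
  destruct (Hloc s) as [ds [es [Ms [Hds [Hes HHs]]]]]; [lra|].
  assert (Hu : exists u, Good u /\ s - es < u).
  { apply NNPP. intros Hn. assert (s <= s - es); [|lra].
    apply Hlub. intros u Gu. apply Rnot_lt_le. intros Hlt. apply Hn. exists u; auto. }
  destruct Hu as [u [[Hu1 [du [Mu [Hdu HHu]]]] Hsu]].
  set (u' := Rmin (s + es / 2) hi).
  assert (Hu' : u' <= hi /\ (u' = hi \/ s < u') /\ s - es < u' <= s + es / 2)
    by (unfold u', Rmin; destruct (Rle_dec (s + es / 2) hi); lra).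
  assert (Good_u' : Good u').
  { split; [lra|]. exists (Rmin du ds), (Rmax Mu Ms).
    split; [apply Rmin_glb_lt; auto|].
    intros c Hc. destruct (Rle_dec c u).
    - apply Hmon with du Mu;
        [apply HHu; lra | split; [apply Rmin_glb_lt; auto | apply Rmin_l] | apply Rmax_l].
    - apply Hmon with ds Ms; [apply HHs; [lra | split_Rabs; lra]
        | split; [apply Rmin_glb_lt; auto | apply Rmin_r] | apply Rmax_r]. }
  assert (u' <= s) by (apply Hub; exact Good_u').
  destruct Good_u' as [_ [d [M [Hd HH]]]]. exists d, M. split; auto.
  intros c Hc. apply HH. lra.
Qed.

Lemma cont3_bounded_on_box f a0 a1 b0 b1 c0 c1 :
  cont3 f -> a0 <= a1 -> b0 <= b1 -> c0 <= c1 ->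
  exists M, forall a b c, a0 <= a <= a1 -> b0 <= b <= b1 -> c0 <= c <= c1 -> Rabs (f a b c) <= M.
Proof.
  intros Hf Ha Hb Hc.
  assert (Hc_unif : forall a b, exists d M, 0 < d /\ forall c, c0 <= c <= c1 ->
     forall a' b', Rabs (a' - a) < d -> Rabs (b' - b) < d -> Rabs (f a' b' c) <= M).
  { intros a b. apply interval_uniformize; auto.
    - intros c d M d' M' HH Hd' HM a' b' H1 H2. apply Rle_trans with M; [apply HH; lra | lra].
    - intros c _. destruct (Hf a b c 1) as [d [Hd Hd']]; [lra|].
      exists d, d, (Rabs (f a b c) + 1). split; [auto | split; [auto|]].
      intros c' _ Hc' a' b' H1 H2. specialize (Hd' a' b' c' H1 H2 Hc'). split_Rabs; lra. }
  assert (Hbc_unif : forall a, exists d M, 0 < d /\ forall b, b0 <= b <= b1 ->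
     forall a', Rabs (a' - a) < d -> forall c, c0 <= c <= c1 -> Rabs (f a' b c) <= M).
  { intros a. apply interval_uniformize; auto.
    - intros b d M d' M' HH Hd' HM a' H1 c Hc'. apply Rle_trans with M; [apply HH; auto; lra | lra].
    - intros b _. destruct (Hc_unif a b) as [d [M [Hd HH]]].
      exists d, d, M. split; [auto | split; [auto|]].
      intros b' _ Hb' a' Ha' c Hc'. apply HH; auto. }
  destruct (interval_uniformize a0 a1
              (fun a _ M => forall b, b0 <= b <= b1 -> forall c, c0 <= c <= c1 -> Rabs (f a b c) <= M))
    as [_ [M [_ HM]]]; auto.
  - intros a d M d' M' HH _ HMM b Hb' c Hc'. apply Rle_trans with M; [apply HH; auto | lra].
  - intros a _. destruct (Hbc_unif a) as [d [M [Hd HH]]].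
    exists 1, d, M. split; [lra | split; [auto|]].
    intros a' _ Ha' b Hb' c Hc'. apply HH; auto.
  - exists M. intros a b c H1 H2 H3. apply HM; auto.
Qed.

Lemma periodic_shift_Z {A : Type} (g : R -> A) : (forall a, g (a + 2 * PI) = g a) ->
  forall k a, g (a + 2 * PI * IZR k) = g a.
Proof.
  intros Hg k. induction k using Z.peano_ind; intros a.
  - rewrite Rmult_0_r, Rplus_0_r. reflexivity.
  - rewrite succ_IZR. replace (a + 2 * PI * (IZR k + 1)) with ((a + 2 * PI * IZR k) + 2 * PI) by ring.
    rewrite Hg. apply IHk.
  - replace (IZR (Z.pred k)) with (IZR k - 1) by (unfold Z.pred; rewrite plus_IZR; simpl; ring).
    replace (a + 2 * PI * (IZR k - 1)) with ((a - 2 * PI) + 2 * PI * IZR k) by ring.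
    rewrite IHk, <- (Hg (a - 2 * PI)). f_equal; ring.
Qed.

Definition lattice (k1 k2 : Z) : pt := (2 * PI * IZR k1, 2 * PI * IZR k2).

Lemma periodic_lattice {A : Type} (g : pt -> A) : periodic g ->
  forall p k1 k2, g (padd p (lattice k1 k2)) = g p.
Proof.
  intros Hg [p1 p2] k1 k2. unfold padd, lattice; simpl.
  rewrite (periodic_shift_Z (fun y => g (y, p2 + 2 * PI * IZR k2)))
    by (intros a; exact (proj1 (Hg (a, p2 + 2 * PI * IZR k2)))).
  apply (periodic_shift_Z (fun y => g (p1, y))). intros b; exact (proj2 (Hg (p1, b))).
Qed.

Lemma reduce_mod_2PI a : exists k : Z, 0 <= a + 2 * PI * IZR k <= 2 * PI.
Proof.
  pose proof PI_RGT_0 as HP.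
  destruct (archimed (a / (2 * PI))) as [H1 H2].
  exists (1 - up (a / (2 * PI)))%Z. rewrite minus_IZR.
  set (z := IZR (up (a / (2 * PI)))) in *.
  assert (E : a = a / (2 * PI) * (2 * PI)) by (field; lra).
  split.
  - assert (a / (2 * PI) * (2 * PI) >= (z - 1) * (2 * PI)) by (apply Rmult_ge_compat_r; lra). lra.
  - assert (a / (2 * PI) * (2 * PI) <= z * (2 * PI)) by (apply Rmult_le_compat_r; lra). lra.
Qed.

Definition Per3 (f : R -> R -> R -> R) : Prop :=
  forall a b c, f (a + 2 * PI) b c = f a b c /\ f a (b + 2 * PI) c = f a b c.

Lemma Per3_shift_Z f : Per3 f -> forall k1 k2 a b c,
  f (a + 2 * PI * IZR k1) (b + 2 * PI * IZR k2) c = f a b c.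
Proof.
  intros Hf k1 k2 a b c.
  rewrite (periodic_shift_Z (fun y => f y (b + 2 * PI * IZR k2) c)) by (intros; apply Hf).
  apply (periodic_shift_Z (fun y => f a y c)). intros; apply Hf.
Qed.

Lemma Derive_periodic g P x : (forall y, g (y + P) = g y) -> Derive g (x + P) = Derive g x.
Proof.
  intros Hg. unfold Derive. f_equal. apply Lim_ext. intros h.
  replace (x + P + h) with ((x + h) + P) by ring. rewrite !Hg. reflexivity.
Qed.

Lemma Per3_d1 f : Per3 f -> Per3 (Defs.d1 f).
Proof.
  intros Hf a b c. unfold Defs.d1. split.
  - apply (Derive_periodic (fun y => f y b c)). intros y. apply Hf.
  - apply Derive_ext. intros y. apply Hf.
Qed.

Lemma Per3_d2 f : Per3 f -> Per3 (Defs.d2 f).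
Proof.
  intros Hf a b c. unfold Defs.d2. split.
  - apply Derive_ext. intros y. apply Hf.
  - apply (Derive_periodic (fun y => f a y c)). intros y. apply Hf.
Qed.

Lemma cont3_periodic_bounded f c0 c1 : cont3 f -> Per3 f -> c0 <= c1 ->
  exists B, 0 <= B /\ forall a b c, c0 <= c <= c1 -> Rabs (f a b c) <= B.
Proof.
  intros Hc Hp Hcc. pose proof PI_RGT_0.
  destruct (cont3_bounded_on_box f 0 (2 * PI) 0 (2 * PI) c0 c1 Hc) as [B HB]; try lra.
  exists B. split.
  - eapply Rle_trans; [apply Rabs_pos | apply (HB 0 0 c0); lra].
  - intros a b c Hcc'. destruct (reduce_mod_2PI a) as [k1 Hk1]. destruct (reduce_mod_2PI b) as [k2 Hk2].
    rewrite <- (Per3_shift_Z f Hp k1 k2). apply HB; auto.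
Qed.

Lemma abs_sub_le_of_derive_bound (g g' : R -> R) x y B :
  (forall z, Rmin x y <= z <= Rmax x y -> is_derive g z (g' z)) ->
  (forall z, Rmin x y <= z <= Rmax x y -> Rabs (g' z) <= B) ->
  Rabs (g x - g y) <= B * Rabs (x - y).
Proof.
  intros Hd Hb.
  destruct (MVT_abs g g' y x) as [z [Hz1 Hz2]].
  { intros z Hz. apply is_derive_Reals, Hd. rewrite Rmin_comm, Rmax_comm. exact Hz. }
  rewrite Hz1. apply Rmult_le_compat_r; [apply Rabs_pos|].
  apply Hb. rewrite Rmin_comm, Rmax_comm. exact Hz2.
Qed.

Lemma C1_periodic_lipschitz f c0 c1 : Ck 1 f -> Per3 f -> c0 <= c1 ->
  exists K, 0 <= K /\ forall a b a' b' c, c0 <= c <= c1 ->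
    Rabs (f a b c - f a' b' c) <= K * (Rabs (a - a') + Rabs (b - b')).
Proof.
  intros [Hder [_ [H1 [H2 _]]]] Hp Hcc.
  destruct (cont3_periodic_bounded (Defs.d1 f) c0 c1 H1 (Per3_d1 f Hp) Hcc) as [B1 [HB1 G1]].
  destruct (cont3_periodic_bounded (Defs.d2 f) c0 c1 H2 (Per3_d2 f Hp) Hcc) as [B2 [HB2 G2]].
  exists (B1 + B2). split; [lra|].
  intros a b a' b' c Hc.
  assert (S1 : Rabs (f a b c - f a' b c) <= B1 * Rabs (a - a')).
  { apply (abs_sub_le_of_derive_bound (fun y => f y b c) (fun y => Defs.d1 f y b c)).
    - intros z _. apply Derive_correct, (Hder z b c).
    - intros z _. apply G1, Hc. }
  assert (S2 : Rabs (f a' b c - f a' b' c) <= B2 * Rabs (b - b')).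
  { apply (abs_sub_le_of_derive_bound (fun y => f a' y c) (fun y => Defs.d2 f a' y c)).
    - intros z _. apply Derive_correct, (Hder a' z c).
    - intros z _. apply G2, Hc. }
  replace (f a b c - f a' b' c) with ((f a b c - f a' b c) + (f a' b c - f a' b' c)) by ring.
  eapply Rle_trans; [apply Rabs_triang|].
  pose proof (Rmult_le_pos _ _ HB2 (Rabs_pos (a - a'))).
  pose proof (Rmult_le_pos _ _ HB1 (Rabs_pos (b - b'))).
  rewrite Rmult_plus_distr_r, !Rmult_plus_distr_l. lra.
Qed.

(** * The stream-function fields *)

Definition BddLip (F : pt -> R) (K B : R) : Prop :=
  0 <= K /\ 0 <= B /\ (forall p, Rabs (F p) <= B) /\
  (forall p q, Rabs (F p - F q) <= K * norm1 (psub p q)).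

Lemma BddLip_ext F G K B : (forall p, F p = G p) -> BddLip F K B -> BddLip G K B.
Proof.
  intros E [HK [HB [Hb Hl]]]. split; [lra | split; [lra | split]].
  - intros p. rewrite <- E. auto.
  - intros p q. rewrite <- !E. auto.
Qed.

Lemma BddLip_plus F G K1 B1 K2 B2 : BddLip F K1 B1 -> BddLip G K2 B2 ->
  BddLip (fun p => F p + G p) (K1 + K2) (B1 + B2).
Proof.
  intros [HK1 [HB1 [Hb1 Hl1]]] [HK2 [HB2 [Hb2 Hl2]]]. split; [lra | split; [lra | split]].
  - intros p. eapply Rle_trans; [apply Rabs_triang|]. specialize (Hb1 p); specialize (Hb2 p); lra.
  - intros p q. replace (F p + G p - (F q + G q)) with ((F p - F q) + (G p - G q)) by ring.
    eapply Rle_trans; [apply Rabs_triang|]. specialize (Hl1 p q); specialize (Hl2 p q); lra.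
Qed.

Lemma BddLip_opp F K B : BddLip F K B -> BddLip (fun p => - F p) K B.
Proof.
  intros [HK [HB [Hb Hl]]]. split; [lra | split; [lra | split]].
  - intros p. rewrite Rabs_Ropp. auto.
  - intros p q. replace (- F p - - F q) with (- (F p - F q)) by ring. rewrite Rabs_Ropp. auto.
Qed.

Lemma BddLip_mult F G K1 B1 K2 B2 : BddLip F K1 B1 -> BddLip G K2 B2 ->
  BddLip (fun p => F p * G p) (B1 * K2 + B2 * K1) (B1 * B2).
Proof.
  intros [HK1 [HB1 [Hb1 Hl1]]] [HK2 [HB2 [Hb2 Hl2]]].
  split; [pose proof (Rmult_le_pos _ _ HB1 HK2); pose proof (Rmult_le_pos _ _ HB2 HK1); lra|].
  split; [apply Rmult_le_pos; lra | split].
  - intros p. rewrite Rabs_mult. apply Rmult_le_compat; auto using Rabs_pos.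
  - intros p q. replace (F p * G p - F q * G q) with (F p * (G p - G q) + G q * (F p - F q)) by ring.
    eapply Rle_trans; [apply Rabs_triang|]. rewrite !Rabs_mult.
    assert (Rabs (F p) * Rabs (G p - G q) <= B1 * (K2 * norm1 (psub p q)))
      by (apply Rmult_le_compat; auto using Rabs_pos).
    assert (Rabs (G q) * Rabs (F p - F q) <= B2 * (K1 * norm1 (psub p q)))
      by (apply Rmult_le_compat; auto using Rabs_pos).
    lra.
Qed.

Lemma sin_lipschitz x y : Rabs (sin x - sin y) <= Rabs (x - y).
Proof.
  rewrite <- (Rmult_1_l (Rabs (x - y))). apply (abs_sub_le_of_derive_bound sin cos).
  - intros; apply is_derive_Reals, derivable_pt_lim_sin.
  - intros z _. pose proof (COS_bound z). apply Rabs_le; lra.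
Qed.

Lemma cos_lipschitz x y : Rabs (cos x - cos y) <= Rabs (x - y).
Proof.
  rewrite <- (Rmult_1_l (Rabs (x - y))). apply (abs_sub_le_of_derive_bound cos (fun z => - sin z)).
  - intros; apply is_derive_Reals, derivable_pt_lim_cos.
  - intros z _. pose proof (SIN_bound z). apply Rabs_le; lra.
Qed.

Lemma Rabs_sin_le1 x : Rabs (sin x) <= 1.
Proof. pose proof (SIN_bound x). apply Rabs_le; lra. Qed.

Lemma Rabs_cos_le1 x : Rabs (cos x) <= 1.
Proof. pose proof (COS_bound x). apply Rabs_le; lra. Qed.

Lemma BddLip_scaled_wave (c A s : R) (w : R -> R) (coord : pt -> R) :
  (forall p q, Rabs (coord p - coord q) <= norm1 (psub p q)) -> Rabs c <= A ->
  (forall x, Rabs (w x) <= 1) -> (forall x y, Rabs (w x - w y) <= Rabs (x - y)) ->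
  BddLip (fun p => c * w (coord p - s)) A A.
Proof.
  intros Hcoord Hc Hb Hl. assert (HA : 0 <= A) by (eapply Rle_trans; [apply Rabs_pos | exact Hc]).
  split; [lra | split; [lra | split]].
  - intros p. rewrite Rabs_mult, <- (Rmult_1_r A).
    apply Rmult_le_compat; auto using Rabs_pos.
  - intros p q. rewrite <- Rmult_minus_distr_l, Rabs_mult.
    apply Rmult_le_compat; auto using Rabs_pos.
    eapply Rle_trans; [apply Hl|].
    replace (coord p - s - (coord q - s)) with (coord p - coord q) by ring.
    apply Hcoord.
Qed.

Section StreamFunction.
Variables (a1 a2 a3 a4 : R -> R).

Definition stream (S p : pt) (t : R) : R := phistar a1 a2 a3 a4 (psub p S) t.
Definition stream_d1 (S p : pt) (t : R) : R := a1 t * cos (fst p - fst S) - a3 t * sin (fst p - fst S).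
Definition stream_d2 (S p : pt) (t : R) : R := a2 t * cos (snd p - snd S) - a4 t * sin (snd p - snd S).

Lemma is_derive_stream_d1 S p t : is_derive (fun y => stream S (y, snd p) t) (fst p) (stream_d1 S p t).
Proof. unfold stream, stream_d1, phistar, psub; simpl. auto_derive; [trivial | unfold Rminus; ring]. Qed.

Lemma is_derive_stream_d2 S p t : is_derive (fun y => stream S (fst p, y) t) (snd p) (stream_d2 S p t).
Proof. unfold stream, stream_d2, phistar, psub; simpl. auto_derive; [trivial | unfold Rminus; ring]. Qed.

Lemma ustar_sh_eq S p t : ustar_sh a1 a2 a3 a4 S p t = (- stream_d2 S p t, stream_d1 S p t).
Proof.
  unfold ustar_sh, perp_grad, pd1, pd2. f_equal; [f_equal|]; apply is_derive_unique.
  - apply is_derive_stream_d2.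
  - apply is_derive_stream_d1.
Qed.

Lemma chiu_sh_eq (chi : pt -> R) (S p : pt) (t : R) :
  (forall b, ex_derive (fun y => chi (y, b)) (fst p)) ->
  (forall a, ex_derive (fun y => chi (a, y)) (snd p)) ->
  chiu_sh chi a1 a2 a3 a4 S p t =
   (- (pd2 chi p * stream S p t + chi p * stream_d2 S p t),
    pd1 chi p * stream S p t + chi p * stream_d1 S p t).
Proof.
  intros E1 E2. unfold chiu_sh, perp_grad, pd1, pd2.
  change (fun y => chi y * phistar a1 a2 a3 a4 (psub y S) t) with (fun y => chi y * stream S y t).
  rewrite (Derive_mult (fun y => chi (fst p, y)) (fun y => stream S (fst p, y) t)),
          (Derive_mult (fun y => chi (y, snd p)) (fun y => stream S (y, snd p) t));
    [| apply E1 | eexists; apply is_derive_stream_d1 | apply E2 | eexists; apply is_derive_stream_d2].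
  replace (Derive (fun y => stream S (y, snd p) t) (fst p)) with (stream_d1 S p t)
    by (symmetry; apply is_derive_unique, is_derive_stream_d1).
  replace (Derive (fun y => stream S (fst p, y) t) (snd p)) with (stream_d2 S p t)
    by (symmetry; apply is_derive_unique, is_derive_stream_d2).
  destruct p; reflexivity.
Qed.

Lemma chiu_sh_eq_ustar_sh (chi : pt -> R) S p t :
  (forall b, ex_derive (fun y => chi (y, b)) (fst p)) ->
  (forall a, ex_derive (fun y => chi (a, y)) (snd p)) ->
  chi p = 1 -> pd1 chi p = 0 -> pd2 chi p = 0 ->
  chiu_sh chi a1 a2 a3 a4 S p t = ustar_sh a1 a2 a3 a4 S p t.
Proof.
  intros E1 E2 H0 H1 H2. rewrite chiu_sh_eq, ustar_sh_eq by assumption.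
  rewrite H0, H1, H2. f_equal; ring.
Qed.

Lemma chiu_sh_time_reversal (chi : pt -> R) T S p t :
  (forall b, ex_derive (fun y => chi (y, b)) (fst p)) ->
  (forall a, ex_derive (fun y => chi (a, y)) (snd p)) ->
  a1 (T - t) = - a1 t -> a2 (T - t) = - a2 t -> a3 (T - t) = - a3 t -> a4 (T - t) = - a4 t ->
  chiu_sh chi a1 a2 a3 a4 S p (T - t) = pneg (chiu_sh chi a1 a2 a3 a4 S p t).
Proof.
  intros E1 E2 e1 e2 e3 e4. rewrite !chiu_sh_eq by assumption.
  unfold stream, stream_d1, stream_d2, phistar, pneg; simpl. rewrite e1, e2, e3, e4. f_equal; ring.
Qed.

Lemma ustar_sh_periodic S p k1 k2 t :
  ustar_sh a1 a2 a3 a4 S (padd p (lattice k1 k2)) t = ustar_sh a1 a2 a3 a4 S p t.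
Proof.
  assert (Hsin : forall a, sin (a + 2 * PI) = sin a)
    by (intros a; rewrite <- (sin_period a 1); f_equal; simpl; ring).
  assert (Hcos : forall a, cos (a + 2 * PI) = cos a)
    by (intros a; rewrite <- (cos_period a 1); f_equal; simpl; ring).
  rewrite !ustar_sh_eq. unfold stream_d1, stream_d2, padd, lattice; simpl.
  replace (fst p + 2 * PI * IZR k1 - fst S) with ((fst p - fst S) + 2 * PI * IZR k1) by ring.
  replace (snd p + 2 * PI * IZR k2 - snd S) with ((snd p - snd S) + 2 * PI * IZR k2) by ring.
  rewrite !(periodic_shift_Z sin Hsin), !(periodic_shift_Z cos Hcos). reflexivity.
Qed.

#[local] Hint Resolve Rabs_sin_le1 sin_lipschitz Rabs_cos_le1 cos_lipschitz
  Rabs_fst_sub_le_norm1 Rabs_snd_sub_le_norm1 : core.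

Section Bounds.
Variables (A t : R).
Hypothesis HA : Rabs (a1 t) <= A /\ Rabs (a2 t) <= A /\ Rabs (a3 t) <= A /\ Rabs (a4 t) <= A.

Lemma BddLip_stream S : BddLip (fun p => stream S p t) (A + A + A + A) (A + A + A + A).
Proof.
  destruct HA as [h1 [h2 [h3 h4]]].
  eapply BddLip_ext; [|repeat apply BddLip_plus].
  2: apply (BddLip_scaled_wave (a1 t) A (fst S) sin fst); auto.
  2: apply (BddLip_scaled_wave (a2 t) A (snd S) sin snd); auto.
  2: apply (BddLip_scaled_wave (a3 t) A (fst S) cos fst); auto.
  2: apply (BddLip_scaled_wave (a4 t) A (snd S) cos snd); auto.
  reflexivity.
Qed.

Lemma BddLip_stream_d1 S : BddLip (fun p => stream_d1 S p t) (A + A) (A + A).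
Proof.
  destruct HA as [h1 [h2 [h3 h4]]].
  eapply BddLip_ext; [|apply BddLip_plus].
  2: apply (BddLip_scaled_wave (a1 t) A (fst S) cos fst); auto.
  2: apply (BddLip_scaled_wave (- a3 t) A (fst S) sin fst); auto;
     rewrite Rabs_Ropp; auto.
  intros p. unfold stream_d1. ring.
Qed.

Lemma BddLip_stream_d2 S : BddLip (fun p => stream_d2 S p t) (A + A) (A + A).
Proof.
  destruct HA as [h1 [h2 [h3 h4]]].
  eapply BddLip_ext; [|apply BddLip_plus].
  2: apply (BddLip_scaled_wave (a2 t) A (snd S) cos snd); auto.
  2: apply (BddLip_scaled_wave (- a4 t) A (snd S) sin snd); auto;
     rewrite Rabs_Ropp; auto.
  intros p. unfold stream_d2. ring.
Qed.

End Bounds.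
End StreamFunction.

Lemma LipBoundedOn_of_BddLip (v : pt -> R -> pt) a b K1 B1 K2 B2 : a <= b ->
  (forall u, a <= u <= b ->
     BddLip (fun p => fst (v p u)) K1 B1 /\ BddLip (fun p => snd (v p u)) K2 B2) ->
  LipBoundedOn v a b.
Proof.
  intros Hab Hv. exists (K1 + K2), (B1 + B2).
  destruct (Hv a) as [[HK1 _] [HK2 _]]; [lra|].
  split; [lra | split].
  - intros p q u Hu. destruct (Hv u Hu) as [[_ [_ [_ L1]]] [_ [_ [_ L2]]]].
    specialize (L1 p q); specialize (L2 p q). unfold norm1 at 1; simpl. lra.
  - intros p u Hu. destruct (Hv u Hu) as [[_ [_ [G1 _]]] [_ [_ [G2 _]]]].
    specialize (G1 p); specialize (G2 p). unfold norm1. lra.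
Qed.

Lemma BddLip_of_C1_periodic f c : Ck 1 f -> Per3 f ->
  exists K B, BddLip (fun p => f (fst p) (snd p) c) K B.
Proof.
  intros H1 Hp.
  destruct (C1_periodic_lipschitz f c c H1 Hp (Rle_refl c)) as [K [HK HL]].
  destruct (cont3_periodic_bounded f c c (proj1 (proj2 H1)) Hp (Rle_refl c)) as [B [HB HG]].
  exists K, B. split; [auto | split; [auto | split]].
  - intros p. apply HG; lra.
  - intros p q. apply HL; lra.
Qed.

Lemma LipBoundedOn_of_C1_periodic (v : pt -> R -> pt) c0 c1 : c0 <= c1 ->
  Ck 1 (fun a b t => fst (v (a, b) t)) -> Ck 1 (fun a b t => snd (v (a, b) t)) ->
  (forall t, periodic (fun x => v x t)) -> LipBoundedOn v c0 c1.
Proof.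
  intros Hc H1 H2 Hp.
  assert (P1 : Per3 (fun a b t => fst (v (a, b) t)))
    by (intros a b t; destruct (Hp t (a, b)) as [E1 E2]; simpl in *; rewrite E1, E2; auto).
  assert (P2 : Per3 (fun a b t => snd (v (a, b) t)))
    by (intros a b t; destruct (Hp t (a, b)) as [E1 E2]; simpl in *; rewrite E1, E2; auto).
  destruct (C1_periodic_lipschitz _ c0 c1 H1 P1 Hc) as [K1 [HK1 L1]].
  destruct (C1_periodic_lipschitz _ c0 c1 H2 P2 Hc) as [K2 [HK2 L2]].
  destruct (cont3_periodic_bounded _ c0 c1 (proj1 (proj2 H1)) P1 Hc) as [B1 [HB1 G1]].
  destruct (cont3_periodic_bounded _ c0 c1 (proj1 (proj2 H2)) P2 Hc) as [B2 [HB2 G2]].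
  exists (K1 + K2), (B1 + B2). split; [lra | split].
  - intros [p1 p2] [q1 q2] u Hu. unfold norm1, psub; simpl.
    specialize (L1 p1 p2 q1 q2 u Hu). specialize (L2 p1 p2 q1 q2 u Hu). simpl in L1, L2. lra.
  - intros [p1 p2] u Hu. unfold norm1. specialize (G1 p1 p2 u Hu). specialize (G2 p1 p2 u Hu). lra.
Qed.

Lemma LipBoundedOn_of_time_support v : LipBoundedOn v 0 1 ->
  (forall p u, u < 0 \/ 1 < u -> v p u = pzero) -> forall a b, LipBoundedOn v a b.
Proof.
  intros [K [B [HK [HL HB]]]] Hout a b.
  assert (HB0 : 0 <= B) by (eapply Rle_trans; [apply (norm1_ge0 (v pzero 0)) | apply HB; lra]).
  exists K, B. split; [exact HK | split].
  - intros p q u _. destruct (Rle_dec 0 u); [destruct (Rle_dec u 1)|]; [apply HL; lra | |];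
      rewrite !Hout, norm1_psub_diag by lra; apply Rmult_le_pos; auto using norm1_ge0.
  - intros p u _. destruct (Rle_dec 0 u); [destruct (Rle_dec u 1)|]; [apply HB; lra | |];
      rewrite Hout, norm1_pzero by lra; exact HB0.
Qed.

Lemma cont_bounded_on_interval (f : R -> R) a b : a <= b -> (forall t, continuous f t) ->
  exists A, forall t, a <= t <= b -> Rabs (f t) <= A.
Proof.
  intros Hab Hc.
  assert (Hc' : forall t, a <= t <= b -> continuity_pt f t)
    by (intros; apply continuity_pt_filterlim, Hc).
  destruct (continuity_ab_maj f a b Hab Hc') as [Mx [HM _]].
  destruct (continuity_ab_min f a b Hab Hc') as [mx [Hm _]].
  exists (Rabs (f Mx) + Rabs (f mx)). intros t Ht. specialize (HM t Ht). specialize (Hm t Ht).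
  apply Rabs_le. split_Rabs; lra.
Qed.

Section StreamFieldBounds.
Variables (a1 a2 a3 a4 : R -> R) (T : R).
Hypothesis HT : 0 <= T.
Hypothesis Ha_cont : forall t, continuous a1 t /\ continuous a2 t /\ continuous a3 t /\ continuous a4 t.

Lemma coefs_bounded : exists A, forall t, 0 <= t <= T ->
  Rabs (a1 t) <= A /\ Rabs (a2 t) <= A /\ Rabs (a3 t) <= A /\ Rabs (a4 t) <= A.
Proof.
  destruct (cont_bounded_on_interval a1 0 T HT (fun t => proj1 (Ha_cont t))) as [A1 H1].
  destruct (cont_bounded_on_interval a2 0 T HT (fun t => proj1 (proj2 (Ha_cont t)))) as [A2 H2].
  destruct (cont_bounded_on_interval a3 0 T HT (fun t => proj1 (proj2 (proj2 (Ha_cont t))))) as [A3 H3].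
  destruct (cont_bounded_on_interval a4 0 T HT (fun t => proj2 (proj2 (proj2 (Ha_cont t))))) as [A4 H4].
  exists (Rabs A1 + Rabs A2 + Rabs A3 + Rabs A4). intros t Ht.
  specialize (H1 t Ht); specialize (H2 t Ht); specialize (H3 t Ht); specialize (H4 t Ht).
  pose proof (Rle_abs A1); pose proof (Rle_abs A2); pose proof (Rle_abs A3); pose proof (Rle_abs A4).
  pose proof (Rabs_pos A1); pose proof (Rabs_pos A2); pose proof (Rabs_pos A3); pose proof (Rabs_pos A4).
  repeat split; lra.
Qed.

Lemma ustar_sh_LipBoundedOn S : LipBoundedOn (ustar_sh a1 a2 a3 a4 S) 0 T.
Proof.
  destruct coefs_bounded as [A HA].
  apply (LipBoundedOn_of_BddLip _ _ _ (A + A) (A + A) (A + A) (A + A) HT).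
  intros u Hu. split.
  - eapply BddLip_ext; [|apply BddLip_opp, (BddLip_stream_d2 a1 a2 a3 a4 A u (HA u Hu))].
    intros p. rewrite ustar_sh_eq. reflexivity.
  - eapply BddLip_ext; [|apply (BddLip_stream_d1 a1 a2 a3 a4 A u (HA u Hu))].
    intros p. rewrite ustar_sh_eq. reflexivity.
Qed.

Variable chi : pt -> R.
Hypothesis Hchi_smooth : smooth_sp chi.
Hypothesis Hchi_per : periodic chi.

Let chi3 (a b _ : R) : R := chi (a, b).

Lemma Per3_chi3 : Per3 chi3.
Proof. intros a b c. unfold chi3. destruct (Hchi_per (a, b)) as [E1 E2]; simpl in *; auto. Qed.

Lemma chi_ex_derive1 (p : pt) (b : R) : ex_derive (fun y => chi (y, b)) (fst p).
Proof. exact (proj1 (proj1 (Hchi_smooth 1%nat) (fst p) b 0)). Qed.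

Lemma chi_ex_derive2 (p : pt) (a : R) : ex_derive (fun y => chi (a, y)) (snd p).
Proof. exact (proj1 (proj2 (proj1 (Hchi_smooth 1%nat) a (snd p) 0))). Qed.

Lemma chiu_sh_LipBoundedOn S : LipBoundedOn (chiu_sh chi a1 a2 a3 a4 S) 0 T.
Proof.
  destruct coefs_bounded as [A HA].
  destruct (BddLip_of_C1_periodic chi3 0 (Hchi_smooth 1%nat) Per3_chi3) as [Kc [Bc Hc]].
  destruct (Hchi_smooth 2%nat) as [_ [_ [Hd1 [Hd2 _]]]].
  destruct (BddLip_of_C1_periodic (Defs.d1 chi3) 0 Hd1 (Per3_d1 _ Per3_chi3)) as [K1 [B1 H1]].
  destruct (BddLip_of_C1_periodic (Defs.d2 chi3) 0 Hd2 (Per3_d2 _ Per3_chi3)) as [K2 [B2 H2]].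
  eapply (LipBoundedOn_of_BddLip _ _ _ _ _ _ _ HT). intros u Hu. specialize (HA u Hu). split.
  - eapply BddLip_ext; [|apply BddLip_opp, BddLip_plus; apply BddLip_mult;
      [exact H2 | apply (BddLip_stream _ _ _ _ _ _ HA S)
      | exact Hc | apply (BddLip_stream_d2 _ _ _ _ _ _ HA S)]].
    intros [p1 p2]. rewrite chiu_sh_eq by auto using chi_ex_derive1, chi_ex_derive2. reflexivity.
  - eapply BddLip_ext; [|apply BddLip_plus; apply BddLip_mult;
      [exact H1 | apply (BddLip_stream _ _ _ _ _ _ HA S)
      | exact Hc | apply (BddLip_stream_d1 _ _ _ _ _ _ HA S)]].
    intros [p1 p2]. rewrite chiu_sh_eq by auto using chi_ex_derive1, chi_ex_derive2. reflexivity.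
Qed.

End StreamFieldBounds.

(** * The structure of Ubar *)

Lemma padd_pzero_r p : padd p pzero = p.
Proof. destruct p; unfold padd, pzero; simpl; f_equal; ring. Qed.

Lemma padd_pzero_l p : padd pzero p = p.
Proof. destruct p; unfold padd, pzero; simpl; f_equal; ring. Qed.

Lemma vsum_pzero f n : (forall k, (1 <= k <= n)%nat -> f k = pzero) -> vsum f n = pzero.
Proof.
  induction n as [|n IHn]; intros H; [reflexivity|]. simpl.
  rewrite IHn by (intros k Hk; apply H; lia). rewrite H by lia. apply padd_pzero_r.
Qed.

Lemma vsum_single f n i : (1 <= i <= n)%nat ->
  (forall k, (1 <= k <= n)%nat -> k <> i -> f k = pzero) -> vsum f n = f i.
Proof.
  induction n as [|n IHn]; intros Hi H; [lia|]. simpl.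
  destruct (Nat.eq_dec i (S n)) as [E|E].
  - subst i. rewrite vsum_pzero by (intros k Hk; apply H; lia). apply padd_pzero_l.
  - rewrite IHn by (lia || (intros k Hk Hki; apply H; lia)).
    rewrite (H (S n)) by lia. apply padd_pzero_r.
Qed.

Lemma vsum_pneg f g n : (forall k, (1 <= k <= n)%nat -> f k = pneg (g k)) -> vsum f n = pneg (vsum g n).
Proof.
  induction n as [|n IHn]; intros H; simpl.
  - unfold pzero, pneg; simpl. f_equal; ring.
  - rewrite IHn by (intros k Hk; apply H; lia). rewrite (H (S n)) by lia.
    unfold padd, pneg; simpl. f_equal; ring.
Qed.

Lemma LipBoundedOn_padd v w a b : LipBoundedOn v a b -> LipBoundedOn w a b ->
  LipBoundedOn (fun p t => padd (v p t) (w p t)) a b.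
Proof.
  intros [K1 [B1 [HK1 [HL1 HB1]]]] [K2 [B2 [HK2 [HL2 HB2]]]].
  exists (K1 + K2), (B1 + B2). split; [lra | split].
  - intros p q u Hu. eapply Rle_trans; [apply norm1_psub_padd_le|].
    specialize (HL1 p q u Hu). specialize (HL2 p q u Hu). lra.
  - intros p u Hu. eapply Rle_trans; [apply norm1_padd_le|].
    specialize (HB1 p u Hu). specialize (HB2 p u Hu). lra.
Qed.

Lemma LipBoundedOn_vsum (f : nat -> pt -> R -> pt) n a b : (forall k, LipBoundedOn (f k) a b) ->
  LipBoundedOn (fun p t => vsum (fun k => f k p t) n) a b.
Proof.
  intros H. induction n as [|n IHn].
  - exists 0, 0. split; [lra|]. simpl. rewrite norm1_psub_diag, norm1_pzero.
    split; intros; lra.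
  - exact (LipBoundedOn_padd _ _ a b IHn (H (S n))).
Qed.

Lemma indic_in lo hi t : lo <= t <= hi -> indic lo hi t = 1.
Proof. intros H. unfold indic. destruct (Rle_dec lo t); [destruct (Rle_dec t hi)|]; lra. Qed.

Lemma indic_out lo hi t : ~ (lo <= t <= hi) -> indic lo hi t = 0.
Proof. intros H. unfold indic. destruct (Rle_dec lo t); [destruct (Rle_dec t hi)|]; auto; lra. Qed.

Lemma pscale1 p : pscale 1 p = p.
Proof. destruct p; unfold pscale; simpl; f_equal; ring. Qed.

Lemma pscale0 p : pscale 0 p = pzero.
Proof. destruct p; unfold pscale, pzero; simpl; f_equal; ring. Qed.

Lemma Tstar_pos M : 0 < Tstar M.
Proof. unfold Tstar. pose proof (pos_INR M). apply Rdiv_lt_0_compat; lra. Qed.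

Lemma t_b_eq M t0 i : t_b M t0 i = t_a M t0 i + Tstar M.
Proof. unfold t_b, t_a. ring. Qed.

Lemma t_a_gap M t0 k j : (k < j)%nat -> t_a M t0 k + 3 * Tstar M <= t_a M t0 j.
Proof.
  intros H. assert (Hkj : INR k + 1 <= INR j) by (rewrite <- S_INR; apply le_INR; lia).
  pose proof (Tstar_pos M). unfold t_a. nra.
Qed.

Lemma t_a_ge_t_a1 M t0 k : (1 <= k)%nat -> t_a M t0 1 <= t_a M t0 k.
Proof.
  intros Hk. destruct (Nat.eq_dec k 1) as [->|E]; [lra|].
  pose proof (t_a_gap M t0 1 k ltac:(lia)). pose proof (Tstar_pos M). lra.
Qed.

Lemma t_c_pred M t0 j : (1 <= j)%nat -> t_c M t0 (j - 1) = t_a M t0 j - Tstar M.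
Proof. intros H. unfold t_c, t_a. rewrite minus_INR by lia. simpl. ring. Qed.

Lemma t_c_midpoint M t0 j : (1 <= j)%nat ->
  (t_c M t0 (j - 1) + t_c M t0 j) / 2 = t_a M t0 j + Tstar M / 2.
Proof. intros H. rewrite t_c_pred by auto. unfold t_c, t_a. field. Qed.

(* Consecutive bumps are [3 T^star] apart. *)
Lemma off_other_bumps M t0 j k u : k <> j ->
  t_a M t0 j - Tstar M < u < t_a M t0 j + 2 * Tstar M -> ~ (t_a M t0 k <= u <= t_b M t0 k).
Proof.
  intros Hkj Hu. rewrite t_b_eq. pose proof (Tstar_pos M).
  destruct (Nat.lt_ge_cases k j) as [Hlt|Hge].
  - pose proof (t_a_gap M t0 k j Hlt). lra.
  - pose proof (t_a_gap M t0 j k ltac:(lia)). lra.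
Qed.

Section UbarStructure.
Variables (M : nat) (t0 : R) (ybar : pt -> R -> pt) (chi : pt -> R) (a1 a2 a3 a4 : R -> R)
  (Sh : nat -> pt).

Let U := Ubar M t0 ybar chi a1 a2 a3 a4 Sh.
Let T := Tstar M.

Definition bump k p t := pscale (indic (t_a M t0 k) (t_b M t0 k) t)
   (chiu_sh chi a1 a2 a3 a4 (Sh k) p (t - t_a M t0 k)).

Lemma Ubar_eq p t : U p t = padd (ybar p t) (vsum (fun k => bump k p t) M).
Proof. reflexivity. Qed.

Lemma bump_in k p t : t_a M t0 k <= t <= t_b M t0 k ->
  bump k p t = chiu_sh chi a1 a2 a3 a4 (Sh k) p (t - t_a M t0 k).
Proof. intros H. unfold bump. rewrite indic_in by auto. apply pscale1. Qed.

Lemma bump_out k p t : ~ (t_a M t0 k <= t <= t_b M t0 k) -> bump k p t = pzero.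
Proof. intros H. unfold bump. rewrite indic_out by auto. apply pscale0. Qed.

Lemma Ubar_off_bumps p t : (forall k, (1 <= k <= M)%nat -> ~ (t_a M t0 k <= t <= t_b M t0 k)) ->
  U p t = ybar p t.
Proof.
  intros H. rewrite Ubar_eq, vsum_pzero; [apply padd_pzero_r|].
  intros k Hk. apply bump_out, H, Hk.
Qed.

Lemma Ubar_on_bump i p tau : (1 <= i <= M)%nat -> 0 <= tau <= T ->
  (forall x t, t_a M t0 i <= t <= t_b M t0 i -> ybar x t = pzero) ->
  U p (t_a M t0 i + tau) = chiu_sh chi a1 a2 a3 a4 (Sh i) p tau.
Proof.
  intros Hi Ht Hy. pose proof (Tstar_pos M). pose proof (t_b_eq M t0 i).
  rewrite Ubar_eq, Hy, padd_pzero_l by (unfold T in *; lra).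
  rewrite (vsum_single _ M i Hi).
  - rewrite bump_in by (unfold T in *; lra). f_equal. ring.
  - intros k Hk Hki. apply bump_out, (off_other_bumps M t0 i); [exact Hki | unfold T in *; lra].
Qed.

Hypothesis Hchi_smooth : smooth_sp chi.
Hypothesis Ha_rev : forall t, 0 <= t <= T ->
  a1 (T - t) = - a1 t /\ a2 (T - t) = - a2 t /\ a3 (T - t) = - a3 t /\ a4 (T - t) = - a4 t.

Lemma Ubar_time_odd j p th : (1 <= j <= M)%nat -> 0 < th < 3 * T / 2 ->
  ybar p (t_a M t0 j + T / 2 + th) = pneg (ybar p (t_a M t0 j + T / 2 - th)) ->
  U p (t_a M t0 j + T / 2 + th) = pneg (U p (t_a M t0 j + T / 2 - th)).
Proof.
  intros Hj Hth Hy. pose proof (Tstar_pos M). pose proof (t_b_eq M t0 j).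
  rewrite !Ubar_eq, Hy, (vsum_pneg _ (fun k => bump k p (t_a M t0 j + T / 2 - th))).
  - destruct (ybar _ _), (vsum _ _). unfold padd, pneg; simpl; f_equal; ring.
  - intros k Hk. destruct (Nat.eq_dec k j) as [->|E].
    + destruct (Rle_dec th (T / 2)).
      * rewrite !bump_in by (unfold T in *; lra).
        replace (t_a M t0 j + T / 2 + th - t_a M t0 j) with (T - (T / 2 - th)) by field.
        replace (t_a M t0 j + T / 2 - th - t_a M t0 j) with (T / 2 - th) by ring.
        destruct (Ha_rev (T / 2 - th)) as [e1 [e2 [e3 e4]]]; [lra|].
        apply chiu_sh_time_reversal; auto using chi_ex_derive1, chi_ex_derive2.
      * rewrite !bump_out by (unfold T in *; lra). unfold pzero, pneg; simpl; f_equal; ring.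
    + rewrite !bump_out by (apply (off_other_bumps M t0 j); [exact E | unfold T in *; lra]).
      unfold pzero, pneg; simpl; f_equal; ring.
Qed.

Hypothesis Hchi_per : periodic chi.
Hypothesis Ha_cont : forall t, continuous a1 t /\ continuous a2 t /\ continuous a3 t /\ continuous a4 t.

Lemma bump_LipBoundedOn k a b : LipBoundedOn (bump k) a b.
Proof.
  pose proof (Tstar_pos M) as HT. pose proof (t_b_eq M t0 k).
  destruct (chiu_sh_LipBoundedOn a1 a2 a3 a4 T ltac:(unfold T; lra) Ha_cont
              chi Hchi_smooth Hchi_per (Sh k)) as [K [B [HK [HL HB]]]].
  assert (HB0 : 0 <= B) by (eapply Rle_trans; [apply norm1_ge0 | apply (HB pzero 0); unfold T; lra]).
  exists K, B. split; [exact HK | split]; intros p; [intros q|]; intros t _;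
    (destruct (Rle_dec (t_a M t0 k) t); [destruct (Rle_dec t (t_b M t0 k))|]).
  all: try (rewrite !bump_out by lra; rewrite ?norm1_psub_diag, ?norm1_pzero;
            try apply Rmult_le_pos; auto using norm1_ge0; fail).
  - rewrite !bump_in by lra. apply HL. unfold T; lra.
  - rewrite bump_in by lra. apply HB. unfold T; lra.
Qed.

Lemma Ubar_LipBoundedOn a b : (forall a b, LipBoundedOn ybar a b) -> LipBoundedOn U a b.
Proof.
  intros Hy. apply (LipBoundedOn_padd ybar (fun p t => vsum (fun k => bump k p t) M)); [apply Hy|].
  apply LipBoundedOn_vsum. intros k. apply bump_LipBoundedOn.
Qed.

End UbarStructure.

(** * Geometry of the torus *)

Lemma sqrt_sum_sq_shift u v d : sqrt (u ^ 2 + (v + d) ^ 2) <= sqrt (u ^ 2 + v ^ 2) + Rabs d.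
Proof.
  set (s := sqrt (u ^ 2 + v ^ 2)).
  assert (Hs : 0 <= s) by apply sqrt_pos.
  assert (Hs2 : s * s = u ^ 2 + v ^ 2) by (apply sqrt_sqrt; nra).
  assert (Hv : Rabs v <= s).
  { rewrite <- sqrt_Rsqr_abs. apply sqrt_le_1_alt. unfold Rsqr. simpl. nra. }
  assert (v * d <= Rabs v * Rabs d) by (rewrite <- Rabs_mult; apply Rle_abs).
  assert (Rabs v * Rabs d <= s * Rabs d) by (apply Rmult_le_compat_r; auto using Rabs_pos).
  assert (Rabs d * Rabs d = d * d) by (rewrite <- Rabs_mult; apply Rabs_right; nra).
  pose proof (Rabs_pos d).
  rewrite <- (sqrt_Rsqr (s + Rabs d)) by lra. apply sqrt_le_1_alt. unfold Rsqr. simpl. nra.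
Qed.

Lemma eucl_psub_shift p q z : eucl (psub q z) <= eucl (psub p z) + norm1 (psub q p).
Proof.
  unfold eucl, norm1, psub; cbn [fst snd].
  set (a := fst p - fst z). set (b := snd p - snd z).
  replace (fst q - fst z) with (a + (fst q - fst p)) by (unfold a; ring).
  replace (snd q - snd z) with (b + (snd q - snd p)) by (unfold b; ring).
  pose proof (sqrt_sum_sq_shift a b (snd q - snd p)) as H2.
  pose proof (sqrt_sum_sq_shift (b + (snd q - snd p)) a (fst q - fst p)) as H1.
  rewrite (Rplus_comm ((b + (snd q - snd p)) ^ 2) ((a + (fst q - fst p)) ^ 2)),
    (Rplus_comm ((b + (snd q - snd p)) ^ 2) (a ^ 2)) in H1.
  lra.
Qed.

Lemma nbhd_open A r p : nbhd A r p ->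
  exists rho, 0 < rho /\ forall q, norm1 (psub q p) < rho -> nbhd A r q.
Proof.
  intros [z [Hz Hd]]. exists (r - eucl (psub p z)). split; [lra|].
  intros q Hq. exists z. split; auto. pose proof (eucl_psub_shift p q z). lra.
Qed.

Lemma nbhd_mono A r r' p : r <= r' -> nbhd A r p -> nbhd A r' p.
Proof. intros H [z [Hz Hd]]. exists z. split; auto. lra. Qed.

Lemma psub_padd_cancel p q w : psub (padd p w) (padd q w) = psub p q.
Proof. unfold psub, padd; simpl. f_equal; ring. Qed.

Lemma psub_psub_cancel p q w : psub (psub p w) (psub q w) = psub p q.
Proof. unfold psub; simpl. f_equal; ring. Qed.

Lemma nbhd_tsq_lattice c L r p k1 k2 :
  nbhd (tsq c L) r p -> nbhd (tsq c L) r (padd p (lattice k1 k2)).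
Proof.
  intros [z [[m1 [m2 [H1 H2]]] Hd]]. exists (padd z (lattice k1 k2)). split.
  - exists (m1 - k1)%Z, (m2 - k2)%Z. unfold padd, lattice; simpl. rewrite !minus_IZR. lra.
  - rewrite psub_padd_cancel. exact Hd.
Qed.

Lemma nbhd_shift_square c c' L r S p : (forall x, tsq c L x -> tsq c' L (psub x S)) ->
  nbhd (tsq c L) r p -> nbhd (tsq c' L) r (psub p S).
Proof.
  intros HS [z [Hz Hd]]. exists (psub z S). split; [apply HS, Hz|].
  rewrite psub_psub_cancel. exact Hd.
Qed.

Lemma partials_zero_of_locally_one f p rho : 0 < rho ->
  (forall q, norm1 (psub q p) < rho -> f q = 1) -> pd1 f p = 0 /\ pd2 f p = 0.
Proof.
  intros Hrho H1. unfold pd1, pd2.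
  split; (erewrite Derive_ext_loc; [apply (Derive_const 1)|]); exists (mkposreal rho Hrho);
    intros y Hy; apply H1; unfold norm1, psub; simpl; rewrite Rminus_diag, Rabs_R0;
    apply Rabs_lt_between' in Hy; simpl in Hy; split_Rabs; lra.
Qed.

Lemma padd_psub p q : padd (psub p q) q = p.
Proof. unfold padd, psub; simpl. destruct p; simpl; f_equal; ring. Qed.

Lemma teq_of_lattice p q k1 k2 : p = padd q (lattice k1 k2) -> teq p q.
Proof. intros ->. exists k1, k2. unfold padd, lattice; simpl. split; ring. Qed.

Lemma teq_lattice p q : teq p q -> exists k1 k2, p = padd q (lattice k1 k2).
Proof.
  intros [k1 [k2 [E1 E2]]]. exists k1, k2. destruct p; unfold padd, lattice; simpl in *. f_equal; auto.
Qed.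

Lemma supp_of_nonzero f z : f z <> 0 -> supp f z.
Proof.
  intros Hz e He. exists z. split; [|exact Hz].
  unfold eucl, psub. rewrite !Rminus_diag. simpl. rewrite Rmult_0_l, Rplus_0_l, sqrt_0. exact He.
Qed.

(** * Comparison of the flows *)

Section FlowComparison.
Variables (M : nat) (t0 : R) (ybar : pt -> R -> pt) (chi : pt -> R) (a1 a2 a3 a4 : R -> R)
  (Sh : nat -> pt) (Phi_y Phi_U : pt -> R -> R -> pt) (Phi_chi Phi_ust : pt -> pt -> R -> R -> pt)
  (c : nat -> pt) (c0 : pt) (L r : R) (mu : pt -> R).
Hypothesis Ht0 : 0 < t0.
Hypothesis Hy_smooth : smooth_vf ybar.
Hypothesis Hy_per : forall t, periodic (fun x => ybar x t).
Hypothesis Hy_supp : exists e, 0 < e /\ forall x t, (t <= e \/ 1 - e <= t) -> ybar x t = pzero.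
Hypothesis Hy_vanish : forall i, (1 <= i <= M)%nat -> forall x t,
  t_a M t0 i <= t <= t_b M t0 i -> ybar x t = pzero.
Hypothesis Hy_odd : forall i, (1 <= i <= M)%nat -> forall x tau,
  t_c M t0 (i - 1) <= (t_c M t0 (i - 1) + t_c M t0 i) / 2 - tau ->
  (t_c M t0 (i - 1) + t_c M t0 i) / 2 + tau <= t_c M t0 i ->
  ybar x ((t_c M t0 (i - 1) + t_c M t0 i) / 2 + tau)
  = pneg (ybar x ((t_c M t0 (i - 1) + t_c M t0 i) / 2 - tau)).
Hypothesis Ha_cont : forall t, continuous a1 t /\ continuous a2 t /\ continuous a3 t /\ continuous a4 t.
Hypothesis Ha_rev : forall t, 0 <= t <= Tstar M ->
  a1 (Tstar M - t) = - a1 t /\ a2 (Tstar M - t) = - a2 t /\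
  a3 (Tstar M - t) = - a3 t /\ a4 (Tstar M - t) = - a4 t.
Hypothesis Hchi_smooth : smooth_sp chi.
Hypothesis Hchi_per : periodic chi.
Hypothesis Hy_flow : IsFlowOn (fun _ => True) ybar Phi_y.
Hypothesis HU_flow : IsFlowOn (fun _ => True) (Ubar M t0 ybar chi a1 a2 a3 a4 Sh) Phi_U.
Hypothesis Hchi_flow : forall S, IsFlowOn (fun t => 0 <= t <= Tstar M)
  (chiu_sh chi a1 a2 a3 a4 S) (Phi_chi S).
Hypothesis Hust_flow : forall S, IsFlowOn (fun t => 0 <= t <= Tstar M)
  (ustar_sh a1 a2 a3 a4 S) (Phi_ust S).
Hypothesis Hr : 0 < r < L.
Hypothesis Hr_chi : forall x, nbhd (tsq c0 L) r x -> chi x = 1.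
Hypothesis Hr_flows : forall S x s t, supp mu x -> 0 <= s <= Tstar M -> 0 <= t <= Tstar M ->
  nbhd (tsq c0 L) r (Phi_chi S x s t) /\ nbhd (tsq c0 L) r (Phi_ust S x s t).
Hypothesis HOshift : forall i, (1 <= i <= M)%nat ->
  forall x, tsq c0 L x <-> tsq (c i) L (psub x (Sh i)).
Hypothesis Hy_shift : forall i, (1 <= i <= M)%nat -> forall x,
  nbhd (tsq (c i) L) L x -> forall t, t_a M t0 i <= t <= t_b M t0 i ->
  teq (Phi_y x 0 t) (padd x (Sh i)).

Let U := Ubar M t0 ybar chi a1 a2 a3 a4 Sh.
Let T := Tstar M.

Lemma ybar_LipBoundedOn a b : LipBoundedOn ybar a b.
Proof.
  apply LipBoundedOn_of_time_support.
  - apply LipBoundedOn_of_C1_periodic;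
      [lra | apply (proj1 Hy_smooth 1%nat) | apply (proj2 Hy_smooth 1%nat) | exact Hy_per].
  - destruct Hy_supp as [e [He H]]. intros p u Hu. apply H. lra.
Qed.

Lemma U_LipBoundedOn a b : LipBoundedOn U a b.
Proof. apply Ubar_LipBoundedOn; auto using ybar_LipBoundedOn. Qed.

Lemma flow_y_IsSolOn x a b : IsSolOn ybar (Phi_y x 0) a b.
Proof. apply (flow_IsSolOn (fun _ => True)); auto. Qed.

Lemma flow_U_IsSolOn x a b : IsSolOn U (Phi_U x 0) a b.
Proof. apply (flow_IsSolOn (fun _ => True)); auto. Qed.

Lemma ybar_time_odd j p th : (1 <= j <= M)%nat -> 0 < th < 3 * T / 2 ->
  ybar p (t_a M t0 j + T / 2 + th) = pneg (ybar p (t_a M t0 j + T / 2 - th)).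
Proof.
  intros Hj Hth. pose proof (Tstar_pos M).
  pose proof (Hy_odd j Hj p th) as Ho. rewrite (t_c_midpoint M t0 j) in Ho by lia.
  apply Ho; rewrite ?t_c_pred by lia; unfold t_c, t_a, T in *; lra.
Qed.

(* Both [ybar] and [U] are odd in time about the midpoint of
   [[t^(j-1)_c, t^j_c] = [t^j_a - T, t^j_a + 2T]]. *)
Lemma sol_returns_over_cell v X j : (1 <= j <= M)%nat ->
  (forall a b, LipBoundedOn v a b) -> (forall a b, IsSolOn v X a b) ->
  (forall p th, 0 < th < 3 * T / 2 ->
     v p (t_a M t0 j + T / 2 + th) = pneg (v p (t_a M t0 j + T / 2 - th))) ->
  X (t_a M t0 j + 2 * T) = X (t_a M t0 j - T).
Proof.
  intros Hj HL HX Hodd. pose proof (Tstar_pos M).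
  replace (t_a M t0 j + 2 * T) with (t_a M t0 j + T / 2 + 3 * T / 2) by field.
  replace (t_a M t0 j - T) with (t_a M t0 j + T / 2 - 3 * T / 2) by field.
  apply (sol_returns_of_time_odd v X); auto. unfold T; lra.
Qed.

Lemma flow_U_eq_flow_y_at_cell_start x j : (1 <= j <= M)%nat ->
  Phi_U x 0 (t_a M t0 j - T) = Phi_y x 0 (t_a M t0 j - T).
Proof.
  pose proof (Tstar_pos M) as HT.
  induction j as [|j IH]; intros Hj; [lia|].
  destruct j as [|j'].
  - apply (sol_unique ybar (Phi_U x 0) (Phi_y x 0) 0 (t_a M t0 1) 0).
    + apply ybar_LipBoundedOn.
    + apply (IsSolOn_ext U); [apply flow_U_IsSolOn|]. intros u Hu.
      apply Ubar_off_bumps. intros k Hk. pose proof (t_a_ge_t_a1 M t0 k ltac:(lia)). lra.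
    + apply flow_y_IsSolOn.
    + unfold t_a; simpl; unfold T in *; lra.
    + unfold t_a; simpl; unfold T in *; lra.
    + rewrite (flow_start (fun _ => True) U Phi_U x 0 HU_flow I).
      rewrite (flow_start (fun _ => True) ybar Phi_y x 0 Hy_flow I). reflexivity.
  - replace (t_a M t0 (S (S j')) - T) with (t_a M t0 (S j') + 2 * T)
      by (unfold t_a, T; rewrite !S_INR; ring).
    rewrite (sol_returns_over_cell U), (sol_returns_over_cell ybar); try lia.
    + apply IH. lia.
    + apply ybar_LipBoundedOn.
    + apply flow_y_IsSolOn.
    + intros p th Hth. apply ybar_time_odd; [lia | exact Hth].
    + apply U_LipBoundedOn.
    + apply flow_U_IsSolOn.
    + intros p th Hth. apply Ubar_time_odd; auto; [lia | apply ybar_time_odd; [lia | exact Hth]].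
Qed.

Lemma flow_U_eq_flow_y_at_bump x i : (1 <= i <= M)%nat ->
  Phi_U x 0 (t_a M t0 i) = Phi_y x 0 (t_a M t0 i).
Proof.
  intros Hi. pose proof (Tstar_pos M) as HT.
  apply (sol_unique ybar (Phi_U x 0) (Phi_y x 0) (t_a M t0 i - T) (t_a M t0 i) (t_a M t0 i - T)).
  - apply ybar_LipBoundedOn.
  - apply (IsSolOn_ext U); [apply flow_U_IsSolOn|]. intros u Hu.
    apply Ubar_off_bumps. intros k Hk. destruct (Nat.eq_dec k i) as [->|E]; [lra|].
    apply (off_other_bumps M t0 i); [exact E | unfold T in *; lra].
  - apply flow_y_IsSolOn.
  - unfold T in *; lra.
  - unfold T in *; lra.
  - apply flow_U_eq_flow_y_at_cell_start; auto.
Qed.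

Lemma flow_y_lattice x k1 k2 t : 0 <= t ->
  Phi_y (padd x (lattice k1 k2)) 0 t = padd (Phi_y x 0 t) (lattice k1 k2).
Proof.
  intros Ht.
  apply (sol_unique ybar _ (fun u => padd (Phi_y x 0 u) (lattice k1 k2)) 0 t 0);
    [apply ybar_LipBoundedOn | apply flow_y_IsSolOn | | lra | lra |].
  - apply IsSolOn_translate; [apply flow_y_IsSolOn|].
    intros u _. apply (periodic_lattice (fun p => ybar p u) (Hy_per u)).
  - rewrite !(flow_start (fun _ => True) ybar Phi_y _ 0 Hy_flow I). reflexivity.
Qed.

Lemma flow_y_injective p q t : 0 <= t -> Phi_y p 0 t = Phi_y q 0 t -> p = q.
Proof.
  intros Ht E.
  rewrite <- (flow_start (fun _ => True) ybar Phi_y p 0 Hy_flow I),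
          <- (flow_start (fun _ => True) ybar Phi_y q 0 Hy_flow I).
  apply (sol_unique ybar (Phi_y p 0) (Phi_y q 0) 0 t t);
    auto using ybar_LipBoundedOn, flow_y_IsSolOn; lra.
Qed.

Lemma chiu_sh_eq_ustar_sh_near_O S p u : nbhd (tsq c0 L) r p ->
  chiu_sh chi a1 a2 a3 a4 S p u = ustar_sh a1 a2 a3 a4 S p u.
Proof.
  intros Hp. destruct (nbhd_open _ _ _ Hp) as [rho [Hrho Hnear]].
  destruct (partials_zero_of_locally_one chi p rho Hrho) as [E1 E2];
    [intros q Hq; apply Hr_chi, Hnear, Hq|].
  apply chiu_sh_eq_ustar_sh; auto using chi_ex_derive1, chi_ex_derive2.
Qed.

Lemma nbhd_O_to_O_i i p : (1 <= i <= M)%nat -> nbhd (tsq c0 L) r p ->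
  nbhd (tsq (c i) L) L (psub p (Sh i)).
Proof.
  intros Hi Hp. apply (nbhd_mono _ r); [lra|].
  apply (nbhd_shift_square c0); [apply HOshift, Hi | exact Hp].
Qed.

Section Bump.
Variables (x : pt) (i : nat).
Hypothesis Hi : (1 <= i <= M)%nat.

Let S := Sh i.
Let W u := Phi_U x 0 (t_a M t0 i + u).
Let V u := Phi_ust S (padd x S) 0 u.

Lemma t_a_nonneg : 0 <= t_a M t0 i.
Proof.
  pose proof (t_a_ge_t_a1 M t0 i ltac:(lia)). pose proof (Tstar_pos M).
  unfold t_a in *; simpl in *. lra.
Qed.

Lemma W_IsSolOn : IsSolOn (chiu_sh chi a1 a2 a3 a4 S) W 0 T.
Proof.
  pose proof (IsSolOn_time_shift U (Phi_U x 0) (t_a M t0 i) (t_a M t0 i + T) (t_a M t0 i)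
                (flow_U_IsSolOn x _ _)) as H.
  replace (t_a M t0 i - t_a M t0 i) with 0 in H by ring.
  replace (t_a M t0 i + T - t_a M t0 i) with T in H by ring.
  eapply IsSolOn_ext; [exact H|]. intros u Hu.
  apply Ubar_on_bump; [exact Hi | unfold T in *; lra | apply Hy_vanish, Hi].
Qed.

Lemma V_IsSolOn : IsSolOn (ustar_sh a1 a2 a3 a4 S) V 0 T.
Proof.
  apply (flow_IsSolOn (fun t => 0 <= t <= Tstar M)); auto.
  pose proof (Tstar_pos M). unfold T; lra.
Qed.

Lemma chiu_sh_LipBounded : LipBoundedOn (chiu_sh chi a1 a2 a3 a4 S) 0 T.
Proof. apply chiu_sh_LipBoundedOn; auto. pose proof (Tstar_pos M). unfold T; lra. Qed.

Lemma ustar_sh_LipBounded : LipBoundedOn (ustar_sh a1 a2 a3 a4 S) 0 T.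
Proof. apply ustar_sh_LipBoundedOn; auto. pose proof (Tstar_pos M). unfold T; lra. Qed.

Lemma W_start : W 0 = Phi_y x 0 (t_a M t0 i).
Proof. unfold W. rewrite Rplus_0_r. apply flow_U_eq_flow_y_at_bump, Hi. Qed.

Lemma V_start : V 0 = padd x S.
Proof.
  apply (flow_start (fun t => 0 <= t <= Tstar M) _ _ _ _ (Hust_flow S)).
  pose proof (Tstar_pos M). lra.
Qed.

Lemma W_stays_near_O s : 0 <= s <= T -> mu (W s) <> 0 -> forall u, 0 <= u <= T -> nbhd (tsq c0 L) r (W u).
Proof.
  intros Hs Hmu u Hu.
  rewrite (sol_eq_flow (fun t => 0 <= t <= Tstar M) (chiu_sh chi a1 a2 a3 a4 S) (Phi_chi S) W 0 T s u);
    auto using chiu_sh_LipBounded, W_IsSolOn.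
  apply Hr_flows; auto using supp_of_nonzero.
Qed.

Lemma V_stays_near_O s : 0 <= s <= T -> mu (V s) <> 0 -> forall u, 0 <= u <= T -> nbhd (tsq c0 L) r (V u).
Proof.
  intros Hs Hmu u Hu.
  rewrite (sol_eq_flow (fun t => 0 <= t <= Tstar M) (ustar_sh a1 a2 a3 a4 S) (Phi_ust S) V 0 T s u);
    auto using ustar_sh_LipBounded, V_IsSolOn.
  apply Hr_flows; auto using supp_of_nonzero.
Qed.

(* Inverting [Phi_y(., 0, t^i_a)], which is [x + S_i] modulo [2 pi Z^2] near [O_i]. *)
Lemma W_start_lattice_of_W_near_O : nbhd (tsq c0 L) r (W 0) ->
  exists k1 k2, W 0 = padd (padd x S) (lattice k1 k2).
Proof.
  intros HW0. pose proof (Tstar_pos M).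
  set (q := psub (W 0) S).
  destruct (teq_lattice _ _ (Hy_shift i Hi q (nbhd_O_to_O_i i _ Hi HW0) (t_a M t0 i)
             ltac:(rewrite t_b_eq; lra))) as [k1 [k2 Ek]].
  assert (Eq : Phi_y q 0 (t_a M t0 i) = Phi_y (padd x (lattice k1 k2)) 0 (t_a M t0 i)).
  { rewrite Ek, flow_y_lattice by apply t_a_nonneg. unfold q. rewrite padd_psub, W_start. reflexivity. }
  apply flow_y_injective in Eq; [|apply t_a_nonneg].
  exists k1, k2. rewrite <- (padd_psub (W 0) S). fold q. rewrite Eq.
  unfold padd; simpl. f_equal; ring.
Qed.

Lemma W_start_lattice_of_V_near_O : nbhd (tsq c0 L) r (V 0) ->
  exists k1 k2, W 0 = padd (padd x S) (lattice k1 k2).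
Proof.
  intros HV0. pose proof (Tstar_pos M).
  rewrite V_start in HV0. apply (nbhd_O_to_O_i i) in HV0; [|exact Hi].
  replace (psub (padd x S) (Sh i)) with x in HV0
    by (unfold psub, padd, S; destruct x; simpl; f_equal; ring).
  destruct (teq_lattice _ _ (Hy_shift i Hi x HV0 (t_a M t0 i) ltac:(rewrite t_b_eq; lra)))
    as [k1 [k2 Ek]].
  exists k1, k2. rewrite W_start. exact Ek.
Qed.

Lemma W_teq_V_of_W_meets_supp_mu s : 0 <= s <= T -> mu (W s) <> 0 ->
  forall t, 0 <= t <= T -> teq (W t) (V t).
Proof.
  intros Hs Hmu t Ht. pose proof (W_stays_near_O s Hs Hmu) as Hnear.
  destruct W_start_lattice_of_W_near_O as [k1 [k2 Ek]]; [apply Hnear; lra|].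
  apply (teq_of_lattice _ _ k1 k2).
  set (W' u := padd (W u) (lattice (- k1) (- k2))).
  assert (E : W' t = V t).
  { apply (sol_unique (ustar_sh a1 a2 a3 a4 S) W' V 0 T 0); auto using ustar_sh_LipBounded, V_IsSolOn.
    - apply IsSolOn_translate; [|intros u _; apply ustar_sh_periodic].
      eapply IsSolOn_ext; [apply W_IsSolOn|]. intros u Hu.
      apply chiu_sh_eq_ustar_sh_near_O, Hnear. lra.
    - lra.
    - unfold W'. rewrite Ek, V_start. unfold padd, lattice; simpl. rewrite !opp_IZR. f_equal; ring. }
  rewrite <- E. unfold W', padd, lattice; simpl. rewrite !opp_IZR. destruct (W t); simpl. f_equal; ring.
Qed.

Lemma W_teq_V_of_V_meets_supp_mu s : 0 <= s <= T -> mu (V s) <> 0 ->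
  forall t, 0 <= t <= T -> teq (W t) (V t).
Proof.
  intros Hs Hmu t Ht. pose proof (V_stays_near_O s Hs Hmu) as Hnear.
  destruct W_start_lattice_of_V_near_O as [k1 [k2 Ek]]; [apply Hnear; lra|].
  apply (teq_of_lattice _ _ k1 k2).
  apply (sol_unique (chiu_sh chi a1 a2 a3 a4 S) W (fun u => padd (V u) (lattice k1 k2)) 0 T 0);
    auto using chiu_sh_LipBounded, W_IsSolOn; [| lra | rewrite V_start; exact Ek].
  apply (IsSolOn_ext (ustar_sh a1 a2 a3 a4 S)).
  - apply IsSolOn_translate; [apply V_IsSolOn | intros u _; apply ustar_sh_periodic].
  - intros u Hu. symmetry. apply chiu_sh_eq_ustar_sh_near_O, nbhd_tsq_lattice, Hnear. lra.
Qed.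

End Bump.
End FlowComparison.

Theorem lemma3p11
  (omega : pt -> Prop) (M : nat) (L : R) (c : nat -> pt) (c0 : pt) (Sh : nat -> pt)
  (mu chi : pt -> R) (t0 : R) (ybar : pt -> R -> pt) (a1 a2 a3 a4 : R -> R) (r : R)
  (Phi_y Phi_U : pt -> R -> R -> pt)
  (Phi_chi Phi_ust : pt -> pt -> R -> R -> pt)
  (* omega nonempty open subset of T^2 *)
  (Homega_per : periodic omega) (Homega_open : is_open omega)
  (Homega_ne : exists x, omega x)
  (* L > 0 and the covering of T^2 by the squares O_1..O_M of side L *)
  (HM : (1 <= M)%nat) (HL : 0 < L)
  (Hcover : forall x, exists i, (1 <= i <= M)%nat /\ tsq (c i) L x)
  (* the square O (corner c0, side L) with closure in omega and O = O_i + S_i *)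
  (HOomega : forall x, tsq_cl c0 L x -> omega x)
  (HOshift : forall i, (1 <= i <= M)%nat ->
     forall x, tsq c0 L x <-> tsq (c i) L (psub x (Sh i)))
  (* the cutoff mu *)
  (Hmu_smooth : smooth_sp mu) (Hmu_per : periodic mu)
  (Hmu_range : forall x, 0 <= mu x <= 1)
  (Hmu_supp : forall x, supp mu x -> tsq c0 L x)
  (Hmu_sum : forall x, rsum (fun i => mu (padd x (Sh i))) M = 1)
  (* the cutoff chi *)
  (Hchi_smooth : smooth_sp chi) (Hchi_per : periodic chi)
  (Hchi_supp : forall x, supp chi x -> omega x)
  (Hchi_one : exists d, 0 < d /\ forall x, nbhd (tsq_cl c0 L) d x -> chi x = 1)
  (* the times: t^0_c = t0 < t^1_a < ... < t^M_c < 1 with spacing T^star *)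
  (Ht0 : 0 < t0) (Ht1 : t_c M t0 M < 1)
  (* ybar *)
  (Hy_smooth : smooth_vf ybar) (Hy_per : forall t, periodic (fun x => ybar x t))
  (Hy_div : div_free ybar)
  (Hy_supp : exists e, 0 < e /\ forall x t, (t <= e \/ 1 - e <= t) -> ybar x t = pzero)
  (Hy_vanish : forall i, (1 <= i <= M)%nat -> forall x t,
     t_a M t0 i <= t <= t_b M t0 i -> ybar x t = pzero)
  (Hy_flow : IsFlowOn (fun _ => True) ybar Phi_y)
  (Hy_shift : forall i, (1 <= i <= M)%nat -> forall x,
     nbhd (tsq (c i) L) L x -> forall t, t_a M t0 i <= t <= t_b M t0 i ->
     teq (Phi_y x 0 t) (padd x (Sh i)))
  (Hy_odd : forall i, (1 <= i <= M)%nat -> forall x tau,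
     t_c M t0 (i - 1) <= (t_c M t0 (i - 1) + t_c M t0 i) / 2 - tau ->
     (t_c M t0 (i - 1) + t_c M t0 i) / 2 + tau <= t_c M t0 i ->
     ybar x ((t_c M t0 (i - 1) + t_c M t0 i) / 2 + tau)
     = pneg (ybar x ((t_c M t0 (i - 1) + t_c M t0 i) / 2 - tau)))
  (* ubar^star = nabla^perp phi^star, phi^star in span{sin x1, sin x2, cos x1, cos x2} *)
  (Ha_cont : forall t, continuous a1 t /\ continuous a2 t /\ continuous a3 t /\ continuous a4 t)
  (Ha_rev : forall t, 0 <= t <= Tstar M ->
     a1 (Tstar M - t) = - a1 t /\ a2 (Tstar M - t) = - a2 t /\
     a3 (Tstar M - t) = - a3 t /\ a4 (Tstar M - t) = - a4 t)
  (* the flows on [0, T^star] of nabla^perp[chi phi^star(. - S, .)] and ubar^star(. - S, .) *)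
  (Hchi_flow : forall S, IsFlowOn (fun t => 0 <= t <= Tstar M)
                           (chiu_sh chi a1 a2 a3 a4 S) (Phi_chi S))
  (Hust_flow : forall S, IsFlowOn (fun t => 0 <= t <= Tstar M)
                           (ustar_sh a1 a2 a3 a4 S) (Phi_ust S))
  (* the radius r *)
  (Hr : 0 < r < L)
  (Hr_chi : forall x, nbhd (tsq c0 L) r x -> chi x = 1)
  (Hr_flows : forall S x s t, supp mu x -> 0 <= s <= Tstar M -> 0 <= t <= Tstar M ->
     nbhd (tsq c0 L) r (Phi_chi S x s t) /\ nbhd (tsq c0 L) r (Phi_ust S x s t))
  (* the flow of Ubar *)
  (HU_flow : IsFlowOn (fun _ => True) (Ubar M t0 ybar chi a1 a2 a3 a4 Sh) Phi_U) :
  forall (x : pt) (i : nat), (1 <= i <= M)%nat ->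
    (exists s, 0 <= s <= Tstar M /\
       (mu (Phi_U x 0 (t_a M t0 i + s)) <> 0 \/
        mu (Phi_ust (Sh i) (padd x (Sh i)) 0 s) <> 0)) ->
    forall t, 0 <= t <= Tstar M ->
      teq (Phi_U x 0 (t_a M t0 i + t)) (Phi_ust (Sh i) (padd x (Sh i)) 0 t).
Proof.
  intros x i Hi [s [Hs [HmuU | Hmust]]] t Ht.
  - apply (W_teq_V_of_W_meets_supp_mu M t0 ybar chi a1 a2 a3 a4 Sh Phi_y Phi_U Phi_chi Phi_ust
             c c0 L r mu) with (s := s); assumption.
  - apply (W_teq_V_of_V_meets_supp_mu M t0 ybar chi a1 a2 a3 a4 Sh Phi_y Phi_U Phi_chi Phi_ust
             c c0 L r mu) with (s := s); assumption.
Qed.
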